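(* Let $L$ be a finite-dimensional simplicial complex and let $L_0$ be a subcomplex of $L$. Suppose that for every simplex $\sigma$ of $L_0$ the complex $\mathrm{link}_L(\sigma)$ is contractible. Then the inclusion map $|L|-|L_0|\hookrightarrow |L|$ is a homotopy equivalence.
   Context: Simplicial complexes are geometric: a set of pairwise disjoint open finite-dimensional simplices in a real vector space closed under taking faces; they need not be locally finite. $|L|$ is the union of the simplices of $L$, with the weak topology (coherent with the closures of simplices). $\mathrm{link}_L(\sigma)$ is the subcomplex consisting of all simplices $\tau$ of $L$ having no vertex in common with $\sigma$ such that $\tau$ and $\sigma$ are both faces of some simplex of $L$. *)

From Stdlib Require Import Reals List.
Open Scope R_scope.

Definition topology (X : Type) := (X -> Prop) -> Prop.

Definition continuous {X Y : Type} (TX : topology X) (TY : topology Y)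
  (f : X -> Y) : Prop :=
  forall U : Y -> Prop, TY U -> TX (fun x => U (f x)).

Definition subspace_top {X : Type} (T : topology X) (P : X -> Prop)
  : topology {x : X | P x} :=
  fun W => exists U, T U /\ forall q, W q <-> U (proj1_sig q).

Definition I01 := { t : R | 0 <= t <= 1 }.

(* Product topology on X x [0,1] (Euclidean topology on [0,1]). *)
Definition prod_I_top {X : Type} (TX : topology X) : topology (X * I01) :=
  fun W => forall x t, W (x, t) ->
    exists U, TX U /\ U x /\ exists eps, 0 < eps /\
      forall x' t', U x' -> Rabs (proj1_sig t' - proj1_sig t) < eps -> W (x', t').

Definition homotopic {X Y : Type} (TX : topology X) (TY : topology Y)
  (f g : X -> Y) : Prop :=
  exists H : X * I01 -> Y, continuous (prod_I_top TX) TY H /\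
    forall x t, (proj1_sig t = 0 -> H (x, t) = f x) /\
                (proj1_sig t = 1 -> H (x, t) = g x).

Definition homotopy_equivalence {X Y : Type} (TX : topology X) (TY : topology Y)
  (f : X -> Y) : Prop :=
  continuous TX TY f /\
  exists g : Y -> X, continuous TY TX g /\
    homotopic TX TX (fun x => g (f x)) (fun x => x) /\
    homotopic TY TY (fun y => f (g y)) (fun y => y).

Definition contractible {X : Type} (T : topology X) : Prop :=
  exists x0 : X, homotopic T T (fun x => x) (fun _ => x0).

Definition finite_set {V : Type} (s : V -> Prop) : Prop :=
  exists l : list V, forall v, s v -> In v l.

Definition subset {V : Type} (s t : V -> Prop) : Prop := forall v, s v -> t v.

Definition is_complex {V : Type} (K : (V -> Prop) -> Prop) : Prop :=
  (forall s, K s -> finite_set s /\ exists v, s v) /\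
  (forall s t, K s -> (exists v, t v) -> subset t s -> K t).

Definition is_subcomplex {V : Type} (K0 K : (V -> Prop) -> Prop) : Prop :=
  is_complex K0 /\ forall s, K0 s -> K s.

Definition finite_dim {V : Type} (K : (V -> Prop) -> Prop) : Prop :=
  exists n : nat, forall s, K s ->
    exists l : list V, (length l <= n)%nat /\ forall v, s v -> In v l.

Definition link {V : Type} (K : (V -> Prop) -> Prop) (sigma : V -> Prop)
  : (V -> Prop) -> Prop :=
  fun tau => K tau /\ (forall v, tau v -> ~ sigma v) /\
    exists rho, K rho /\ subset tau rho /\ subset sigma rho.

Definition supp {V : Type} (x : V -> R) : V -> Prop := fun v => x v <> 0.

(* Points of |K|: barycentric coordinate functions whose support is a simplex. *)
Definition in_real {V : Type} (K : (V -> Prop) -> Prop) (x : V -> R) : Prop :=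
  (forall v, 0 <= x v) /\ K (supp x) /\
  exists l : list V, NoDup l /\ (forall v, x v <> 0 -> In v l) /\
    fold_right Rplus 0 (map x l) = 1.

Definition real {V : Type} (K : (V -> Prop) -> Prop) := { x : V -> R | in_real K x }.

(* Weak topology: U is open iff its trace on every closed simplex |s|
   is open in the Euclidean topology of |s|. *)
Definition weak_top {V : Type} (K : (V -> Prop) -> Prop) : topology (real K) :=
  fun U => forall s, K s -> forall p : real K, U p -> subset (supp (proj1_sig p)) s ->
    exists eps, 0 < eps /\
      forall q : real K, subset (supp (proj1_sig q)) s ->
        (forall v, Rabs (proj1_sig p v - proj1_sig q v) < eps) -> U q.

(* |K| - |K0| : points whose carrier (open) simplex is not in K0. *)
Definition not_in_sub {V : Type} (K K0 : (V -> Prop) -> Prop) (p : real K) : Prop :=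
  ~ K0 (supp (proj1_sig p)).

(* Filter |L| by the open sets W_m of points whose carrier is not a simplex of L0 with at most
   m vertices: W_0 = |L|, and W_n = |L| - |L0| once every simplex of L has at most n vertices.
   Each inclusion W_(k+1) <= W_k is a homotopy equivalence.  A point of W_k close to a simplex
   s of L0 with k+1 vertices is the join of a point of s, with weight 1 - t, and a point y of
   link(s), with weight t.  Raising t while moving y along a contraction of link(s) pushes the
   point into W_(k+1); points far from all such s stay fixed, and the regions near distinct s
   are disjoint.  Continuity in the weak topology is checked on each closed simplex, where
   compactness makes the contractions uniformly continuous.  Composing the finitely many steps
   proves the theorem. *)

From Stdlib Require Import Reals List.
From Stdlib Require Import Lra Lia Classical ClassicalDescription
  ClassicalEpsilon FunctionalExtensionality PropExtensionality ProofIrrelevance Permutation.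
Open Scope R_scope.

Lemma Rabs_le_inv a b : Rabs a <= b -> -b <= a <= b.
Proof. unfold Rabs; destruct Rcase_abs; intros; lra. Qed.
Lemma Rabs_lt_inv a b : Rabs a < b -> -b < a < b.
Proof. unfold Rabs; destruct Rcase_abs; intros; lra. Qed.

Section ListSums.
Context {V : Type}.

Definition sumL (f : V -> R) (l : list V) : R := fold_right Rplus 0 (map f l).

Lemma sumL_nil f : sumL f nil = 0. Proof. reflexivity. Qed.
Lemma sumL_cons f v l : sumL f (v :: l) = f v + sumL f l. Proof. reflexivity. Qed.
Lemma sumL_app f l1 l2 : sumL f (l1 ++ l2) = sumL f l1 + sumL f l2.
Proof. induction l1; simpl. rewrite sumL_nil; lra. rewrite !sumL_cons, IHl1. lra. Qed.

Lemma sumL_ext f g l : (forall v, In v l -> f v = g v) -> sumL f l = sumL g l.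
Proof. induction l; intros H; [reflexivity|]. rewrite !sumL_cons. rewrite (H a (or_introl eq_refl)).
 rewrite IHl; auto. intros; apply H; right; auto. Qed.

Lemma sumL_scal c f l : sumL (fun v => c * f v) l = c * sumL f l.
Proof. induction l; unfold sumL in *; simpl; [lra|]. rewrite IHl. lra. Qed.

Lemma sumL_minus f g l : sumL (fun v => f v - g v) l = sumL f l - sumL g l.
Proof. induction l; unfold sumL in *; simpl; [lra|]. rewrite IHl. lra. Qed.

Lemma sumL_nonneg f l : (forall v, In v l -> 0 <= f v) -> 0 <= sumL f l.
Proof. induction l; intros H; unfold sumL in *; simpl; [lra|].
 assert (0 <= f a) by (apply H; left; auto).
 assert (0 <= fold_right Rplus 0 (map f l)) by (apply IHl; intros; apply H; right; auto). lra. Qed.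

Lemma sumL_le f g l : (forall v, In v l -> f v <= g v) -> sumL f l <= sumL g l.
Proof. intros H. assert (0 <= sumL (fun v => g v - f v) l).
 apply sumL_nonneg. intros v Hv; specialize (H v Hv); lra.
 rewrite sumL_minus in H0. lra. Qed.

Lemma sumL_zero f l : (forall v, In v l -> f v = 0) -> sumL f l = 0.
Proof. intros H. rewrite (sumL_ext f (fun _ => 0)); auto. induction l; unfold sumL in *; simpl; auto.
 rewrite IHl. lra. intros; apply H; right; auto. Qed.

Lemma sumL_ge_term f l v : (forall w, In w l -> 0 <= f w) -> In v l -> f v <= sumL f l.
Proof. induction l; intros H Hv; simpl in Hv; [contradiction|]. rewrite sumL_cons.
 destruct Hv as [->|Hv].
 - assert (0 <= sumL f l) by (apply sumL_nonneg; intros; apply H; right; auto). lra.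
 - assert (f v <= sumL f l) by (apply IHl; auto; intros; apply H; right; auto).
   assert (0 <= f a) by (apply H; left; auto). lra. Qed.

Lemma sumL_dist_le f g l e : (forall v, In v l -> Rabs (f v - g v) <= e) ->
  Rabs (sumL f l - sumL g l) <= INR (length l) * e.
Proof. induction l; intros H. unfold sumL; simpl. rewrite Rminus_0_r, Rabs_R0. lra.
 rewrite !sumL_cons. replace (f a + sumL f l - (g a + sumL g l)) with ((f a - g a) + (sumL f l - sumL g l)) by ring.
 eapply Rle_trans. apply Rabs_triang.
 assert (Rabs (f a - g a) <= e) by (apply H; left; auto).
 assert (Rabs (sumL f l - sumL g l) <= INR (length l) * e) by (apply IHl; intros; apply H; right; auto).
 change (length (a :: l)) with (S (length l)). rewrite S_INR. lra. Qed.

Definition vdec (a b : V) : {a = b} + {a <> b} := excluded_middle_informative (a = b).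

Lemma sumL_remove f l v : NoDup l -> In v l -> sumL f l = f v + sumL f (remove vdec v l).
Proof. induction l as [|a l IH]; intros Hnd Hv; simpl in Hv; [contradiction|].
 inversion Hnd; subst. simpl. destruct (vdec v a) as [->|Hne].
 - rewrite notin_remove by auto. reflexivity.
 - destruct Hv as [->|Hv]; [congruence|]. rewrite !sumL_cons. rewrite (IH H2 Hv). ring. Qed.

Lemma NoDup_remove_vdec l v : NoDup l -> NoDup (remove vdec v l).
Proof. induction l; intros H; simpl; auto. inversion H; subst. destruct (vdec v a); auto.
 constructor; auto. intros Hin. apply in_remove in Hin. tauto. Qed.

Lemma sumL_eq_on_support f l1 l2 : NoDup l1 -> NoDup l2 ->
  (forall v, f v <> 0 -> In v l1 /\ In v l2) -> sumL f l1 = sumL f l2.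
Proof. revert f l2. induction l1 as [|a l1 IH]; intros f l2 H1 H2 Hs.
 - symmetry. apply sumL_zero. intros v Hv. destruct (Req_dec (f v) 0); auto.
   destruct (Hs v H) as [[] _].
 - inversion H1; subst. rewrite sumL_cons. destruct (Req_dec (f a) 0) as [Ha|Ha].
   + rewrite Ha, Rplus_0_l. apply IH; auto. intros v Hv. destruct (Hs v Hv) as [[->|Hi] Hi2]; [congruence|]; auto.
   + assert (Ha2 : In a l2) by (apply (Hs a Ha)). rewrite (sumL_remove f l2 a H2 Ha2). f_equal.
     set (f' := fun v => if vdec v a then 0 else f v).
     rewrite (sumL_ext f f' l1). rewrite (sumL_ext f f' (remove vdec a l2)).
     apply IH; auto. apply NoDup_remove_vdec; auto. intros v Hv. unfold f' in Hv.
     destruct (vdec v a) as [->|Hne]; [congruence|].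
     destruct (Hs v Hv) as [[->|Hi] Hi2]; [congruence|].
     split; auto. apply in_in_remove; auto.
     intros v Hv; unfold f'; destruct (vdec v a) as [->|]; auto. apply in_remove in Hv; tauto.
     intros v Hv; unfold f'; destruct (vdec v a) as [->|]; auto. contradiction.
Qed.

Lemma NoDup_list_ex (l : list V) : exists l', NoDup l' /\ (forall v, In v l <-> In v l').
Proof. exists (nodup vdec l). split. apply NoDup_nodup. intros; rewrite nodup_In; tauto. Qed.

Lemma NoDup_filter_ex (P : V -> Prop) (l : list V) : exists l', NoDup l' /\ (forall v, In v l' <-> In v l /\ P v).
Proof. destruct (NoDup_list_ex l) as [l1 [Hn Hi]].
 exists (filter (fun v => if excluded_middle_informative (P v) then true else false) l1).
 split. apply NoDup_filter; auto. intros v. rewrite filter_In. rewrite <- Hi.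
 destruct (excluded_middle_informative (P v)); split; intros [? ?]; try split; auto; discriminate. Qed.

Lemma sumL_perm (f : V -> R) l1 l2 : Permutation l1 l2 -> sumL f l1 = sumL f l2.
Proof. induction 1; auto. rewrite !sumL_cons, IHPermutation; auto. rewrite !sumL_cons; ring. congruence. Qed.
Lemma sumL_same (f : V -> R) l1 l2 : NoDup l1 -> NoDup l2 -> (forall v, In v l1 <-> In v l2) -> sumL f l1 = sumL f l2.
Proof. intros. apply sumL_perm, NoDup_Permutation; auto. Qed.
Lemma sumL_neq_near f l c : sumL f l <> c ->
  exists e, 0 < e /\ forall g, (forall v, In v l -> Rabs (g v - f v) < e) -> sumL g l <> c.
Proof.
  intros Hne. set (d := Rabs (sumL f l - c)). assert (Hd : 0 < d) by (apply Rabs_pos_lt; lra).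
  set (n := INR (length l)). assert (Hn : 0 <= n) by apply pos_INR.
  exists (d / (n + 1)). split; [apply Rdiv_lt_0_compat; lra|]. intros g Hg Hgc.
  assert (Hdist : Rabs (sumL g l - sumL f l) <= n * (d / (n + 1))).
  { apply sumL_dist_le. intros v Hv. left. apply Hg; auto. }
  replace (n * (d / (n + 1))) with (d - d / (n + 1)) in Hdist by (field; lra).
  assert (0 < d / (n + 1)) by (apply Rdiv_lt_0_compat; lra).
  rewrite Hgc, Rabs_minus_sym in Hdist. fold d in Hdist. lra.
Qed.
End ListSums.

Lemma sumL_map {V W : Type} (f : W -> R) (g : V -> W) (l : list V) :
  sumL f (map g l) = sumL (fun v => f (g v)) l.
Proof. unfold sumL. rewrite map_map. reflexivity. Qed.

Section MinL.
Context {V : Type}.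

Definition minL (f : V -> R) (l : list V) : R :=
  match l with nil => 0 | v :: l' => fold_right (fun w acc => Rmin (f w) acc) (f v) l' end.

Lemma minL_le (f : V -> R) l v : In v l -> minL f l <= f v.
Proof. destruct l as [|a l]; [intros []|]. simpl. revert v. induction l as [|b l IH]; intros v Hv; simpl in *.
 destruct Hv as [<-|[]]; lra.
 destruct Hv as [<-|[<-|Hv]]. eapply Rle_trans; [apply Rmin_r|]. apply IH; auto.
 apply Rmin_l. eapply Rle_trans; [apply Rmin_r|]. apply IH; auto. Qed.
Lemma minL_in (f : V -> R) l : l <> nil -> exists v, In v l /\ minL f l = f v.
Proof. destruct l as [|a l]; [congruence|]. intros _. simpl. induction l as [|b l IH]; simpl.
 exists a; auto. destruct IH as [v [Hv Heq]]. unfold Rmin at 1. destruct Rle_dec.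
 exists b; auto. exists v. split; [destruct Hv as [<-|Hv]; auto|]. auto. Qed.
Lemma minL_ge (f : V -> R) l c : l <> nil -> (forall v, In v l -> c <= f v) -> c <= minL f l.
Proof. intros Hl H. destruct (minL_in f l Hl) as [v [Hv ->]]. auto. Qed.
Lemma minL_same (f : V -> R) l1 l2 : (forall v, In v l1 <-> In v l2) -> minL f l1 = minL f l2.
Proof. intros H. destruct l1 as [|a l1]. destruct l2 as [|b l2]; auto. exfalso; apply (proj2 (H b)); left; auto.
 assert (Hl2 : l2 <> nil). { intros ->. apply (proj1 (H a)); left; auto. }
 apply Rle_antisym.
 - apply minL_ge; auto. intros v Hv. apply minL_le. apply H; auto.
 - apply minL_ge; [congruence|]. intros v Hv. apply minL_le. apply H; auto. Qed.
Lemma minL_close (f g : V -> R) l e : l <> nil -> (forall v, In v l -> Rabs (f v - g v) <= e) -> Rabs (minL f l - minL g l) <= e.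
Proof. intros Hl H. destruct (minL_in f l Hl) as [v1 [Hv1 E1]]. destruct (minL_in g l Hl) as [v2 [Hv2 E2]].
 pose proof (minL_le f l v2 Hv2). pose proof (minL_le g l v1 Hv1).
 pose proof (Rabs_le_inv _ _ (H v1 Hv1)). pose proof (Rabs_le_inv _ _ (H v2 Hv2)). apply Rabs_le. lra. Qed.
End MinL.

Lemma uniform_on_interval (a b : R) (F : R -> R -> Prop) :
  (forall e e' t, 0 < e' <= e -> F e t -> F e' t) ->
  (forall t, a <= t <= b -> exists e, 0 < e /\ forall t', a <= t' <= b -> Rabs (t' - t) < e -> F e t') ->
  exists e, 0 < e /\ forall t, a <= t <= b -> F e t.
Proof.
  intros Hmono Hloc. destruct (Rle_or_lt a b) as [Hab|Hab]; [| exists 1; split; [lra|]; intros; lra].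
  set (S := fun x => a <= x <= b /\ exists e, 0 < e /\ forall t, a <= t <= x -> F e t).
  assert (HSa : S a).
  { destruct (Hloc a (conj (Rle_refl a) Hab)) as [e [He Hf]]. split; [lra|]. exists e; split; auto.
    intros t Ht. apply Hf; [lra|]. replace (t - a) with 0 by lra. rewrite Rabs_R0; auto. }
  assert (Hb : bound S) by (exists b; intros x [Hx _]; lra).
  destruct (completeness S Hb (ex_intro _ a HSa)) as [c [Hub Hlub]].
  assert (Hac : a <= c) by (apply Hub; auto).
  assert (Hcb : c <= b) by (apply Hlub; intros x [Hx _]; lra).
  destruct (Hloc c (conj Hac Hcb)) as [ec [Hec Hfc]].
  assert (Hx : exists x, S x /\ c - ec < x).
  { apply NNPP; intro Hn. assert (c <= c - ec).
    { apply Hlub. intros x Hx. destruct (Rle_or_lt x (c - ec)); auto. exfalso; apply Hn; exists x; auto. }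
    lra. }
  destruct Hx as [x [[Hx1 [ex [Hex Hfx]]] Hxc]].
  assert (Hx_le_c : x <= c) by (apply Hub; split; auto; exists ex; auto).
  set (m := Rmin b (c + ec / 2)).
  assert (HSm : S m).
  { split. unfold m; split; [apply Rmin_glb; lra | apply Rmin_l].
    exists (Rmin ex ec). split. apply Rmin_glb_lt; auto.
    intros t Ht. destruct (Rle_or_lt t x) as [Htx|Htx].
    - apply Hmono with ex. split; [apply Rmin_glb_lt; auto | apply Rmin_l]. apply Hfx; lra.
    - apply Hmono with ec. split; [apply Rmin_glb_lt; auto | apply Rmin_r].
      assert (m <= c + ec / 2) by apply Rmin_r. assert (m <= b) by apply Rmin_l.
      apply Hfc. lra. apply Rabs_def1; lra. }
  assert (Hmc : m <= c) by (apply Hub; auto).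
  assert (Hmb : m = b).
  { unfold m in *. destruct (Rle_or_lt b (c + ec/2)). rewrite Rmin_left; auto.
    rewrite Rmin_right in Hmc by lra. lra. }
  destruct HSm as [_ [e [He Hf]]]. exists e; split; auto. intros t Ht. apply Hf. lra.
Qed.

Section Compactness.
Context {A : Type}.
Definition upd (y : A -> R) (a : A) (t : R) : A -> R := fun b => if vdec b a then t else y b.

Definition in_box (l : list A) (lo hi z y : A -> R) : Prop :=
  (forall a, In a l -> lo a <= y a <= hi a) /\ (forall a, ~ In a l -> y a = z a).

Lemma upd_same y a t : upd y a t a = t.
Proof. unfold upd; destruct (vdec a a); congruence. Qed.
Lemma upd_other y a t b : b <> a -> upd y a t b = y b.
Proof. unfold upd; destruct (vdec b a); congruence. Qed.
Lemma upd_upd y a t t' : upd (upd y a t) a t' = upd y a t'.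
Proof. apply functional_extensionality; intro b; unfold upd; destruct (vdec b a); auto. Qed.
Lemma upd_id y a : upd y a (y a) = y.
Proof. apply functional_extensionality; intro b; unfold upd; destruct (vdec b a); subst; auto. Qed.

Definition box_uniformity (l : list A) : Prop :=
  forall (lo hi z : A -> R) (F : R -> (A -> R) -> Prop),
  (forall e e' y, 0 < e' <= e -> F e y -> F e' y) ->
  (forall y, in_box l lo hi z y -> exists e, 0 < e /\ forall y', in_box l lo hi z y' ->
      (forall a, In a l -> Rabs (y' a - y a) < e) -> F e y') ->
  exists e, 0 < e /\ forall y, in_box l lo hi z y -> F e y.

Lemma box_uniformity_nil : box_uniformity nil.
Proof.
  intros lo hi z F Hmono Hloc.
  assert (Hz : forall y, in_box nil lo hi z y -> y = z).
  { intros y [_ H]. apply functional_extensionality; intro b; apply H; auto. }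
  assert (Bz : in_box nil lo hi z z) by (split; [intros _ []|auto]).
  destruct (Hloc z Bz) as [e [He Hf]]. exists e; split; auto.
  intros y Hy. rewrite (Hz y Hy). apply Hf; auto. intros _ [].
Qed.

Lemma box_uniformity_dup a l : In a l -> box_uniformity l -> box_uniformity (a :: l).
Proof.
  intros Hal IH lo hi z F Hmono Hloc.
  assert (Heq : forall y, in_box (a :: l) lo hi z y <-> in_box l lo hi z y).
  { intros y; split; intros [H1 H2]; split.
    - intros b Hb; apply H1; right; auto.
    - intros b Hb; apply H2; intros [->|?]; auto.
    - intros b [->|Hb]; apply H1; auto.
    - intros b Hb; apply H2; intros ?; apply Hb; right; auto. }
  destruct (IH lo hi z F) as [e0 [He0 Hf0]]; auto.
  - intros y Hy. apply Heq in Hy. destruct (Hloc y Hy) as [e [He Hf]].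
    exists e; split; auto. intros y' Hy' Hc. apply Hf. apply Heq; auto.
    intros b [->|Hb]; apply Hc; auto.
  - exists e0; split; auto. intros y Hy; apply Hf0, Heq; auto.
Qed.

(* Each slice [y a = t] is handled by the induction hypothesis, and the slices are glued
   by [uniform_on_interval] in the new coordinate. *)
Lemma box_uniformity_cons a l : ~ In a l -> box_uniformity l -> box_uniformity (a :: l).
Proof.
  intros Hal IH lo hi z F Hmono Hloc.
  assert (Hslice : forall t, lo a <= t <= hi a -> exists e, 0 < e /\
      forall y, in_box l lo hi (upd z a t) y ->
        forall t', lo a <= t' <= hi a -> Rabs (t' - t) < e -> F e (upd y a t')).
  { intros t Ht.
    set (Ft := fun e y => forall t', lo a <= t' <= hi a -> Rabs (t' - t) < e -> F e (upd y a t')).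
    destruct (IH lo hi (upd z a t) Ft) as [e [He Hf]].
    - intros e e' y He' Hy t' Ht' Hd. apply Hmono with e; auto. apply Hy; auto. lra.
    - intros y [Hy1 Hy2].
      assert (Hya : y a = t) by (rewrite Hy2 by auto; apply upd_same).
      assert (Hyb : in_box (a :: l) lo hi z y).
      { split. intros b [<-|Hb]; [rewrite Hya; auto | apply Hy1; auto].
        intros b Hb. rewrite Hy2 by (intros ?; apply Hb; right; auto). apply upd_other.
        intros ->; apply Hb; left; auto. }
      destruct (Hloc y Hyb) as [e0 [He0 Hf0]]. exists e0; split; auto.
      intros y' [Hy1' Hy2'] Hc t' Ht' Hd. apply Hf0.
      + split. intros b [<-|Hb]. rewrite upd_same; auto. rewrite upd_other by (intros ->; contradiction). apply Hy1'; auto.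
        intros b Hb. assert (b <> a) by (intros ->; apply Hb; left; auto).
        rewrite upd_other by auto. rewrite Hy2' by (intros ?; apply Hb; right; auto). apply upd_other; auto.
      + intros b [<-|Hb]. rewrite upd_same, Hya; auto.
        rewrite upd_other by (intros ->; contradiction). apply Hc; auto.
    - exists e; split; auto. }
  set (G := fun e t' => forall y, in_box (a :: l) lo hi z y -> y a = t' -> F e y).
  destruct (uniform_on_interval (lo a) (hi a) G) as [e [He Hf]].
  - intros e e' t' He' Hg y Hy Hya. apply Hmono with e; auto.
  - intros t Ht. destruct (Hslice t Ht) as [e [He Hf]]. exists e; split; auto.
    intros t' Ht' Hd y [Hy1 Hy2] Hya.
    assert (Hy0 : in_box l lo hi (upd z a t) (upd y a t)).
    { split. intros b Hb. rewrite upd_other by (intros ->; contradiction). apply Hy1; right; auto.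
      intros b Hb. unfold upd. destruct (vdec b a); auto. apply Hy2. intros [->|?]; auto. }
    specialize (Hf _ Hy0 t' Ht' Hd). rewrite upd_upd, <- Hya, upd_id in Hf. exact Hf.
  - exists e; split; auto. intros y Hy. apply (Hf (y a)); auto. destruct Hy as [Hy1 _]; apply Hy1; left; auto.
Qed.

Lemma uniform_on_box (l : list A) : box_uniformity l.
Proof.
  induction l as [|a l IH]; [apply box_uniformity_nil|].
  destruct (classic (In a l)); [apply box_uniformity_dup | apply box_uniformity_cons]; auto.
Qed.
End Compactness.

Section Realization.
Context {V : Type}.
Variable L : (V -> Prop) -> Prop.
Hypothesis HL : is_complex L.

Definition close (p q : V -> R) (e : R) := forall v, Rabs (p v - q v) < e.

(* Openness in the weak topology of |L|, stated on coordinate functions; [weak_top_rel_open] and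
   [rel_open_weak_top] translate between the two. *)
Definition rel_open (O : (V -> R) -> Prop) : Prop :=
  (forall p, O p -> in_real L p) /\
  forall s, L s -> forall p, O p -> subset (supp p) s ->
    exists e, 0 < e /\ forall q, in_real L q -> subset (supp q) s -> close p q e -> O q.

Lemma close_mono p q e e' : e <= e' -> close p q e -> close p q e'.
Proof. intros H1 H v. specialize (H v). lra. Qed.
Lemma close_refl p e : 0 < e -> close p p e.
Proof. intros H v. rewrite Rminus_diag, Rabs_R0. auto. Qed.

Lemma in_real_nonneg x v : in_real L x -> 0 <= x v.
Proof. intros [H _]; auto. Qed.
Lemma in_real_simplex x : in_real L x -> L (supp x).
Proof. intros [_ [H _]]; auto. Qed.
Lemma in_real_list x : in_real L x -> exists l, NoDup l /\ (forall v, x v <> 0 -> In v l) /\ sumL x l = 1.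
Proof. intros [_ [_ H]]; exact H. Qed.
Lemma in_real_sum x l : in_real L x -> NoDup l -> (forall v, x v <> 0 -> In v l) -> sumL x l = 1.
Proof. intros Hx Hl Hs. destruct (in_real_list x Hx) as [l' [Hn [Hs' Hsum]]]. rewrite <- Hsum.
 apply sumL_eq_on_support; auto. Qed.
Lemma in_real_sum_le1 x l : in_real L x -> NoDup l -> sumL x l <= 1.
Proof. intros Hx Hl. destruct (in_real_list x Hx) as [l' [Hn [Hs' Hsum]]].
 set (f := fun v => if excluded_middle_informative (In v l) then x v else 0).
 rewrite (sumL_ext x f l). rewrite (sumL_eq_on_support f l l'); auto.
 rewrite <- Hsum. apply sumL_le. intros v _. unfold f. destruct excluded_middle_informative; [lra|].
 apply in_real_nonneg; auto.
 intros v Hv. unfold f in Hv. destruct excluded_middle_informative; [|congruence]. split; auto.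
 intros v Hv; unfold f; destruct excluded_middle_informative; tauto. Qed.
Lemma in_real_le1 x v : in_real L x -> x v <= 1.
Proof. intros Hx. pose proof (in_real_sum_le1 x (v :: nil) Hx (NoDup_cons v (@in_nil V v) (NoDup_nil V))).
 rewrite sumL_cons, sumL_nil in H. lra. Qed.
Lemma in_real_supp_ne x : in_real L x -> exists v, x v <> 0.
Proof. intros Hx. destruct (in_real_list x Hx) as [l [_ [Hs Hsum]]]. apply NNPP; intro Hn.
 rewrite sumL_zero in Hsum. lra. intros v _. apply NNPP; intro; apply Hn; exists v; auto. Qed.

Lemma nonzero_abs_lb (f : V -> R) (l : list V) : exists e, 0 < e /\ forall v, In v l -> f v <> 0 -> e <= Rabs (f v).
Proof. induction l as [|a l IH]. exists 1; split; [lra|]; intros _ [].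
 destruct IH as [e [He Hf]]. destruct (Req_dec (f a) 0) as [Ha|Ha].
 - exists e; split; auto. intros v [<-|Hv] Hfv; [contradiction|]. auto.
 - exists (Rmin e (Rabs (f a))). split. apply Rmin_glb_lt; auto. apply Rabs_pos_lt; auto.
   intros v [<-|Hv] Hfv. apply Rmin_r. eapply Rle_trans; [apply Rmin_l|]; auto. Qed.

Lemma supp_incl_near p : in_real L p -> exists e, 0 < e /\ forall q, close p q e -> subset (supp p) (supp q).
Proof. intros Hp. destruct (in_real_list p Hp) as [l [_ [Hs _]]]. destruct (nonzero_abs_lb p l) as [e [He Hf]].
 exists e; split; auto. intros q Hc v Hv. unfold supp in *. specialize (Hf v (Hs v Hv) Hv). specialize (Hc v).
 intro Hq. rewrite Hq, Rminus_0_r in Hc. lra. Qed.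

Definition cont_on (Q : (V -> R) -> Prop) (f : (V -> R) -> (V -> R)) :=
  forall s, L s -> forall x, Q x -> subset (supp x) s -> forall O, rel_open O -> O (f x) ->
    exists e, 0 < e /\ forall x', Q x' -> subset (supp x') s -> close x x' e -> O (f x').

Definition htpy_cont_on (Q : (V -> R) -> Prop) (H : (V -> R) -> R -> (V -> R)) :=
  forall s, L s -> forall x t, Q x -> subset (supp x) s -> 0 <= t <= 1 -> forall O, rel_open O -> O (H x t) ->
    exists e, 0 < e /\ forall x' t', Q x' -> subset (supp x') s -> close x x' e -> 0 <= t' <= 1 ->
      Rabs (t' - t) < e -> O (H x' t').

Lemma rel_open_real O p : rel_open O -> O p -> in_real L p.
Proof. intros [H _] Hp; auto. Qed.

Lemma rel_open_preimage Q f O : rel_open Q -> cont_on Q f -> rel_open O -> rel_open (fun x => Q x /\ O (f x)).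
Proof. intros HQ Hf HO. split. intros p [Hp _]. apply (rel_open_real Q); auto.
 intros s Hs p [Hp Hop] Hsub. destruct HQ as [_ HQ]. destruct (HQ s Hs p Hp Hsub) as [e1 [He1 H1]].
 destruct (Hf s Hs p Hp Hsub O HO Hop) as [e2 [He2 H2]].
 exists (Rmin e1 e2). split. apply Rmin_glb_lt; auto.
 intros q Hq Hqs Hc. assert (Q q) by (apply H1; auto; eapply close_mono; [apply Rmin_l|]; eauto).
 split; auto. apply H2; auto. eapply close_mono; [apply Rmin_r|]; eauto. Qed.

Lemma cont_on_id Q : (forall x, Q x -> in_real L x) -> cont_on Q (fun x => x).
Proof. intros HQ s Hs x Hx Hsub O [HO1 HO2] Ox. destruct (HO2 s Hs x Ox Hsub) as [e [He Hf]].
 exists e; split; [exact He|]. intros x' Hx' Hs' Hc. apply Hf; auto. Qed.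

Lemma htpy_cont_at Q H t0 : 0 <= t0 <= 1 -> htpy_cont_on Q H -> cont_on Q (fun x => H x t0).
Proof. intros Ht0 HH s Hs x Hx Hsub O HO Ox. destruct (HH s Hs x t0 Hx Hsub Ht0 O HO Ox) as [e [He Hf]].
 exists e; split; auto. intros x' Hx' Hs' Hc. apply Hf; auto. rewrite Rminus_diag, Rabs_R0; auto. Qed.

Lemma htpy_cont_const Q f : cont_on Q f -> htpy_cont_on Q (fun x t => f x).
Proof. intros Hf s Hs x t Hx Hsub Ht O HO Ox. destruct (Hf s Hs x Hx Hsub O HO Ox) as [e [He Hf']].
 exists e; split; auto. Qed.

Lemma htpy_cont_restrict P Q H : (forall x, P x -> Q x) -> htpy_cont_on Q H -> htpy_cont_on P H.
Proof. intros HPQ HH s Hs x t Hx Hsub Ht O HO Ox. destruct (HH s Hs x t (HPQ x Hx) Hsub Ht O HO Ox) as [e [He Hf]].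
 exists e; split; auto. Qed.

Lemma htpy_cont_rev Q H : htpy_cont_on Q H -> htpy_cont_on Q (fun x t => H x (1 - t)).
Proof. intros HH s Hs x t Hx Hsub Ht O HO Ox. destruct (HH s Hs x (1 - t) Hx Hsub ltac:(lra) O HO Ox) as [e [He Hf]].
 exists e; split; auto. intros x' t' Hx' Hs' Hc Ht' Hd. apply Hf; auto. lra.
 replace (1 - t' - (1 - t)) with (- (t' - t)) by ring. rewrite Rabs_Ropp; auto. Qed.

Lemma htpy_tube Q H : rel_open Q -> htpy_cont_on Q H -> forall x t, Q x -> 0 <= t <= 1 -> forall O, rel_open O -> O (H x t) ->
  exists N, rel_open N /\ N x /\ (forall y, N y -> Q y) /\ exists e, 0 < e /\
    forall y t', N y -> 0 <= t' <= 1 -> Rabs (t' - t) < e -> O (H y t').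
Proof.
  intros HQ HH x t Hx Ht O HO Ox.
  assert (Hxr : in_real L x) by (apply (rel_open_real Q); auto).
  destruct (HH (supp x) (in_real_simplex x Hxr) x t Hx (fun v h => h) Ht O HO Ox) as [e0 [He0 Hf0]].
  set (e := e0 / 2).
  set (N := fun y => Q y /\ forall t', 0 <= t' <= 1 -> Rabs (t' - t) <= e -> O (H y t')).
  exists N. split; [|split; [|split]].
  - split. intros p [Hp _]; apply (rel_open_real Q); auto.
    intros s Hs p [Hp Hpt] Hsub.
    destruct HQ as [_ HQ2]. destruct (HQ2 s Hs p Hp Hsub) as [eq [Heq Hqq]].
    set (F := fun d t' => forall q, Q q -> subset (supp q) s -> close p q d -> O (H q t')).
    destruct (uniform_on_interval (Rmax 0 (t - e)) (Rmin 1 (t + e)) F) as [d [Hd Hfd]].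
    + intros d d' t' Hd' Hf q Hq Hqs Hc. apply Hf; auto. eapply close_mono; [|eauto]. lra.
    + intros t' Ht'. assert (Ht'1 : 0 <= t' <= 1).
      { split. eapply Rle_trans; [apply Rmax_l|]; apply Ht'. eapply Rle_trans; [apply Ht'|apply Rmin_l]. }
      assert (Ht'2 : Rabs (t' - t) <= e).
      { destruct Ht' as [Ha Hb]. pose proof (Rmax_r 0 (t - e)). pose proof (Rmin_r 1 (t + e)).
        apply Rabs_le; lra. }
      destruct (HH s Hs p t' Hp Hsub Ht'1 O HO (Hpt t' Ht'1 Ht'2)) as [e1 [He1 Hf1]].
      exists e1; split; auto. intros t'' Ht'' Hd q Hq Hqs Hc. apply Hf1; auto.
      split. eapply Rle_trans; [apply Rmax_l|]; apply Ht''. eapply Rle_trans; [apply Ht''|apply Rmin_l].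
    + exists (Rmin eq d). split. apply Rmin_glb_lt; auto.
      intros q Hqr Hqs Hc. assert (Q q) by (apply Hqq; auto; eapply close_mono; [apply Rmin_l|]; eauto).
      split; auto. intros t' Ht' Hd'. apply (Hfd t'); auto.
      split. apply Rmax_lub; [lra|]. apply Rabs_le_inv in Hd'; lra.
      apply Rmin_glb; [lra|]. apply Rabs_le_inv in Hd'; lra.
      eapply close_mono; [apply Rmin_r|]; eauto.
  - split; auto. intros t' Ht' Hd. apply Hf0; auto. intros v h; exact h. apply close_refl; auto. unfold e in Hd; lra.
  - intros y [Hy _]; auto.
  - exists e. split. unfold e; lra. intros y t' [_ Hy] Ht' Hd. apply Hy; auto. lra.
Qed.

Lemma htpy_cont_precomp Q R f H : rel_open Q -> rel_open R -> cont_on Q f -> (forall x, Q x -> R (f x)) -> htpy_cont_on R H ->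
  htpy_cont_on Q (fun x t => H (f x) t).
Proof. intros HQ HR Hf HfR HH s Hs x t Hx Hsub Ht O HO Ox.
 destruct (htpy_tube R H HR HH (f x) t (HfR x Hx) Ht O HO Ox) as [N [HN [Nfx [HNR [e [He Hf2]]]]]].
 destruct (Hf s Hs x Hx Hsub N HN Nfx) as [e1 [He1 Hf1]].
 exists (Rmin e e1). split. apply Rmin_glb_lt; auto.
 intros x' t' Hx' Hs' Hc Ht' Hd. apply Hf2; auto. apply Hf1; auto. eapply close_mono; [apply Rmin_r|]; eauto.
 eapply Rlt_le_trans; [eauto|apply Rmin_l]. Qed.

Lemma htpy_cont_postcomp Q R K f : rel_open R -> htpy_cont_on Q K -> (forall x t, Q x -> 0 <= t <= 1 -> R (K x t)) -> cont_on R f ->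
  htpy_cont_on Q (fun x t => f (K x t)).
Proof. intros HR HK HKR Hf s Hs x t Hx Hsub Ht O HO Ox.
 assert (HO' : rel_open (fun y => R y /\ O (f y))) by (apply rel_open_preimage; auto).
 destruct (HK s Hs x t Hx Hsub Ht _ HO' (conj (HKR x t Hx Ht) Ox)) as [e [He Hf2]].
 exists e; split; auto. intros x' t' Hx' Hs' Hc Ht' Hd. apply (Hf2 x' t'); auto. Qed.

Lemma cont_on_comp Q R f g : rel_open R -> cont_on Q f -> (forall x, Q x -> R (f x)) -> cont_on R g ->
  cont_on Q (fun x => g (f x)).
Proof. intros HR Hf HfR Hg s Hs x Hx Hsub O HO Ox.
 assert (HO' : rel_open (fun y => R y /\ O (g y))) by (apply rel_open_preimage; auto).
 destruct (Hf s Hs x Hx Hsub _ HO' (conj (HfR x Hx) Ox)) as [e [He Hf2]].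
 exists e; split; auto. intros x' Hx' Hs' Hc. apply (Hf2 x'); auto. Qed.

Definition htpy_concat (H1 H2 : (V -> R) -> R -> (V -> R)) : (V -> R) -> R -> (V -> R) :=
  fun x t => if Rle_dec t (1/2) then H1 x (2 * t) else H2 x (2 * t - 1).

Lemma htpy_cont_concat Q H1 H2 : htpy_cont_on Q H1 -> htpy_cont_on Q H2 -> (forall x, Q x -> H1 x 1 = H2 x 0) ->
  htpy_cont_on Q (htpy_concat H1 H2).
Proof. intros HH1 HH2 Hj s Hs x t Hx Hsub Ht O HO Ox. unfold htpy_concat in *.
 destruct (Rle_dec t (1/2)) as [Hle|Hgt].
 - destruct (Req_dec t (1/2)) as [Heq|Hneq].
   + subst t. replace (2 * (1/2)) with 1 in Ox by field.
     destruct (HH1 s Hs x 1 Hx Hsub ltac:(lra) O HO Ox) as [e1 [He1 Hf1]].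
     rewrite Hj in Ox by auto.
     destruct (HH2 s Hs x 0 Hx Hsub ltac:(lra) O HO Ox) as [e2 [He2 Hf2]].
     exists (Rmin e1 e2 / 2). split. assert (0 < Rmin e1 e2) by (apply Rmin_glb_lt; auto). lra.
     intros x' t' Hx' Hs' Hc Ht' Hd. pose proof (Rmin_l e1 e2). pose proof (Rmin_r e1 e2).
     assert (0 < Rmin e1 e2) by (apply Rmin_glb_lt; auto).
     apply Rabs_def2 in Hd.
     destruct (Rle_dec t' (1/2)).
     * apply Hf1; auto. eapply close_mono; [|eauto]; lra. lra. apply Rabs_def1; lra.
     * apply Hf2; auto. eapply close_mono; [|eauto]; lra. lra. apply Rabs_def1; lra.
   + destruct (HH1 s Hs x (2 * t) Hx Hsub ltac:(lra) O HO Ox) as [e1 [He1 Hf1]].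
     exists (Rmin (e1 / 2) ((1/2 - t)/2)). split. apply Rmin_glb_lt; lra.
     intros x' t' Hx' Hs' Hc Ht' Hd. pose proof (Rmin_l (e1/2) ((1/2 - t)/2)). pose proof (Rmin_r (e1/2) ((1/2 - t)/2)).
     apply Rabs_def2 in Hd. destruct (Rle_dec t' (1/2)); [|lra].
     apply Hf1; auto. eapply close_mono; [|eauto]; lra. lra. apply Rabs_def1; lra.
 - destruct (HH2 s Hs x (2 * t - 1) Hx Hsub ltac:(lra) O HO Ox) as [e1 [He1 Hf1]].
   exists (Rmin (e1 / 2) ((t - 1/2)/2)). split. apply Rmin_glb_lt; lra.
   intros x' t' Hx' Hs' Hc Ht' Hd. pose proof (Rmin_l (e1/2) ((t - 1/2)/2)). pose proof (Rmin_r (e1/2) ((t - 1/2)/2)).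
   apply Rabs_def2 in Hd. destruct (Rle_dec t' (1/2)); [lra|].
   apply Hf1; auto. eapply close_mono; [|eauto]; lra. lra. apply Rabs_def1; lra.
Qed.

Definition heq_incl (P Q : (V -> R) -> Prop) : Prop :=
  (forall x, P x -> Q x) /\ exists r, (forall x, Q x -> P (r x)) /\ cont_on Q r /\
  (exists H, htpy_cont_on Q H /\ (forall x t, Q x -> 0 <= t <= 1 -> Q (H x t)) /\
     (forall x, Q x -> H x 0 = x) /\ (forall x, Q x -> H x 1 = r x)) /\
  (exists K, htpy_cont_on P K /\ (forall x t, P x -> 0 <= t <= 1 -> P (K x t)) /\
     (forall x, P x -> K x 0 = r x) /\ (forall x, P x -> K x 1 = x)).

Lemma heq_incl_refl P : rel_open P -> heq_incl P P.
Proof. intros HP. split; auto. exists (fun x => x). split; auto. split.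
 apply cont_on_id. intros; apply (rel_open_real P); auto.
 split; exists (fun x t => x); repeat split; auto; apply htpy_cont_const; apply cont_on_id; intros; apply (rel_open_real P); auto. Qed.

Lemma heq_incl_trans P Q R : rel_open P -> rel_open Q -> rel_open R -> heq_incl P Q -> heq_incl Q R -> heq_incl P R.
Proof.
  intros HP HQ HR [HPQ [r1 [Hr1 [Hc1 [[H1 [HH1 [HH1p [HH10 HH11]]]] [K1 [HK1 [HK1p [HK10 HK11]]]]]]]]]
               [HQR [r2 [Hr2 [Hc2 [[H2 [HH2 [HH2p [HH20 HH21]]]] [K2 [HK2 [HK2p [HK20 HK21]]]]]]]]].
  split; auto. exists (fun x => r1 (r2 x)). split; auto. split.
  apply cont_on_comp with Q; auto. split.
  - exists (htpy_concat H2 (fun x t => H1 (r2 x) t)). split; [|split; [|split]].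
    + apply htpy_cont_concat; auto. apply htpy_cont_precomp with Q; auto. intros x Hx. rewrite HH21, HH10; auto.
    + intros x t Hx Ht. unfold htpy_concat. destruct Rle_dec. apply HH2p; auto; lra. apply HQR, HH1p; auto. lra.
    + intros x Hx. unfold htpy_concat. destruct Rle_dec; [|lra]. rewrite Rmult_0_r; auto.
    + intros x Hx. unfold htpy_concat. destruct Rle_dec; [lra|]. replace (2 * 1 - 1) with 1 by ring. auto.
  - exists (htpy_concat (fun x t => r1 (K2 x t)) K1). split; [|split; [|split]].
    + apply htpy_cont_concat; [| exact HK1 |].
      apply (htpy_cont_postcomp P Q K2 r1 HQ); [apply htpy_cont_restrict with Q; auto | intros x t Hx Ht; apply HK2p; auto | exact Hc1].
      intros x Hx. rewrite HK21, HK10; auto.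
    + intros x t Hx Ht. unfold htpy_concat. destruct Rle_dec. apply Hr1, HK2p; auto; lra. apply HK1p; auto; lra.
    + intros x Hx. unfold htpy_concat. destruct Rle_dec; [|lra]. rewrite Rmult_0_r, HK20; auto.
    + intros x Hx. unfold htpy_concat. destruct Rle_dec; [lra|]. replace (2 * 1 - 1) with 1 by ring. auto.
Qed.

Lemma real_eq (p q : real L) : proj1_sig p = proj1_sig q -> p = q.
Proof. apply eq_sig_hprop. intros; apply proof_irrelevance. Qed.

Definition coord_set (U : real L -> Prop) (f : V -> R) : Prop := exists h : in_real L f, U (exist _ f h).

Lemma coord_set_iff U (p : real L) : coord_set U (proj1_sig p) <-> U p.
Proof. split. intros [h Hu]. replace p with (exist (in_real L) (proj1_sig p) h); auto. apply real_eq; auto.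
 intros Hu. exists (proj2_sig p). destruct p; auto. Qed.

Lemma weak_top_rel_open U : weak_top L U -> rel_open (coord_set U).
Proof. intros HU. split. intros p [h _]; auto.
 intros s Hs p [h Hp] Hsub. destruct (HU s Hs (exist _ p h) Hp Hsub) as [e [He Hf]].
 exists e; split; auto. intros q Hq Hqs Hc. exists Hq. apply (Hf (exist _ q Hq)); auto. Qed.

Lemma rel_open_weak_top O : rel_open O -> weak_top L (fun p => O (proj1_sig p)).
Proof. intros [_ HO] s Hs p Hp Hsub. destruct (HO s Hs (proj1_sig p) Hp Hsub) as [e [He Hf]].
 exists e; split; auto. intros q Hqs Hc. apply Hf; auto. apply (proj2_sig q). Qed.

Lemma weak_top_ext (A B : real L -> Prop) : (forall p, A p <-> B p) -> weak_top L A -> weak_top L B.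
Proof. intros Hab HA s Hs p Hp Hsub. apply Hab in Hp. destruct (HA s Hs p Hp Hsub) as [e [He Hf]].
 exists e; split; auto. intros q Hqs Hc. apply Hab; auto. Qed.

Lemma rel_open_whole : rel_open (in_real L).
Proof. split; auto. intros s Hs p Hp Hsub. exists 1; split; [lra|]. auto. Qed.

Lemma complex_face s t : L s -> (exists v, t v) -> subset t s -> L t.
Proof. destruct HL as [_ H]; apply H. Qed.

Lemma simplex_list (s : V -> Prop) : L s -> exists l, NoDup l /\ forall v, s v <-> In v l.
Proof. intros Hs. destruct HL as [H _]. destruct (H s Hs) as [[l Hl] _].
 destruct (NoDup_filter_ex s l) as [l' [Hn Hi]]. exists l'. split; auto. intros v. rewrite Hi. split; [|tauto]. intros; split; auto. Qed.

Lemma real_sub_eq (Ps : real L -> Prop) (p q : {p : real L | Ps p}) :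
  proj1_sig (proj1_sig p) = proj1_sig (proj1_sig q) -> p = q.
Proof. intros H. apply eq_sig_hprop; [intros; apply proof_irrelevance|]. apply real_eq; auto. Qed.

Lemma homotopic_real (K : (V -> R) -> R -> V -> R) (f g : real L -> real L) :
  htpy_cont_on (in_real L) K -> (forall x t, in_real L x -> 0 <= t <= 1 -> in_real L (K x t)) ->
  (forall y, proj1_sig (f y) = K (proj1_sig y) 0) -> (forall y, proj1_sig (g y) = K (proj1_sig y) 1) ->
  homotopic (weak_top L) (weak_top L) f g.
Proof.
  intros HK HKin Hf Hg.
  assert (Hin : forall (y : real L) (t : I01), in_real L (K (proj1_sig y) (proj1_sig t))).
  { intros [y hy] [t ht]. apply HKin; auto. }
  exists (fun yt => exist (in_real L) (K (proj1_sig (fst yt)) (proj1_sig (snd yt))) (Hin (fst yt) (snd yt))).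
  split.
  - intros U HU y t HUy. simpl in HUy. apply (coord_set_iff U) in HUy. simpl in HUy.
    destruct y as [y hy]. destruct t as [t ht]. simpl in *.
    destruct (htpy_tube (in_real L) K rel_open_whole HK y t hy ht (coord_set U) (weak_top_rel_open U HU) HUy)
      as [N [HN [Ny [HNP [e [He Hfe]]]]]].
    exists (fun p => N (proj1_sig p)). split; [|split].
    + apply rel_open_weak_top; auto.
    + simpl; auto.
    + exists e; split; auto. intros y' t' Ny' Hd. apply (coord_set_iff U). simpl.
      apply Hfe; auto. destruct t'; simpl; auto.
  - intros y [t ht]. simpl. split; intros Ht; apply real_eq; simpl; subst t; auto.
Qed.

Lemma homotopic_sub (P : (V -> R) -> Prop) (Ps : real L -> Prop) (K : (V -> R) -> R -> V -> R)
  (f g : {p : real L | Ps p} -> {p : real L | Ps p}) :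
  rel_open P -> (forall p, Ps p <-> P (proj1_sig p)) ->
  htpy_cont_on P K -> (forall x t, P x -> 0 <= t <= 1 -> P (K x t)) ->
  (forall x, proj1_sig (proj1_sig (f x)) = K (proj1_sig (proj1_sig x)) 0) ->
  (forall x, proj1_sig (proj1_sig (g x)) = K (proj1_sig (proj1_sig x)) 1) ->
  homotopic (subspace_top (weak_top L) Ps) (subspace_top (weak_top L) Ps) f g.
Proof.
  intros HP HPs HK HKin Hf Hg.
  assert (Kin : forall (x : {p : real L | Ps p}) (t : I01), P (K (proj1_sig (proj1_sig x)) (proj1_sig t))).
  { intros [x hx] [t ht]. simpl. apply HKin; auto. apply HPs; auto. }
  assert (Kreal : forall x t, in_real L (K (proj1_sig (proj1_sig x)) (proj1_sig t)))
    by (intros x t; apply (rel_open_real P); [exact HP | apply Kin]).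
  exists (fun xt => let p := exist (in_real L) _ (Kreal (fst xt) (snd xt)) in
    exist Ps p (proj2 (HPs p) (Kin (fst xt) (snd xt)))).
  split.
  - intros Wo [U [HU HW]] x t HWx. simpl in HWx. apply HW, coord_set_iff in HWx. simpl in HWx.
    destruct x as [[x hx] hn]. destruct t as [t ht]. simpl in *.
    assert (HPx : P x) by (apply (HPs (exist _ x hx)); auto).
    destruct (htpy_tube P K HP HK x t HPx ht (coord_set U) (weak_top_rel_open U HU) HWx)
      as [N [HN [Nx [HNP [e [He Hfe]]]]]].
    exists (fun x' => N (proj1_sig (proj1_sig x'))). split; [|split].
    + exists (fun p => N (proj1_sig p)). split; [apply rel_open_weak_top; auto | tauto].
    + simpl; auto.
    + exists e; split; auto. intros x' t' Nx' Hd. apply HW, coord_set_iff. simpl.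
      apply Hfe; auto. destruct t'; simpl; auto.
  - intros x [t ht]. simpl. split; intros Ht; apply real_sub_eq; simpl; subst t; auto.
Qed.

Lemma cont_retraction (Ps : real L -> Prop) (r : (V -> R) -> V -> R) (g : real L -> {p : real L | Ps p}) :
  cont_on (in_real L) r -> (forall y, proj1_sig (proj1_sig (g y)) = r (proj1_sig y)) ->
  continuous (weak_top L) (subspace_top (weak_top L) Ps) g.
Proof.
  intros Hrc Hg Wo [U [HU HW]].
  apply weak_top_ext with (fun y => (fun x => in_real L x /\ coord_set U (r x)) (proj1_sig y)).
  - intros y. simpl. rewrite HW, <- (coord_set_iff U), Hg.
    split; [intros [_ Hu] | intros Hu; split]; auto. apply (proj2_sig y).
  - apply (rel_open_weak_top (fun x => in_real L x /\ coord_set U (r x))).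
    apply rel_open_preimage; auto; [apply rel_open_whole | apply weak_top_rel_open; auto].
Qed.

Theorem heq_incl_homotopy_equivalence (P : (V -> R) -> Prop) (Ps : real L -> Prop) :
  rel_open P -> (forall p, Ps p <-> P (proj1_sig p)) -> heq_incl P (in_real L) ->
  homotopy_equivalence (subspace_top (weak_top L) Ps) (weak_top L) (fun p => proj1_sig p).
Proof.
  intros HP HPs [_ [r [Hr [Hrc [[H [HH [HHp [HH0 HH1]]]] [K [HK [HKp [HK0 HK1]]]]]]]]].
  assert (Hgin : forall y : real L, in_real L (r (proj1_sig y)))
    by (intros y; apply (rel_open_real P); auto; apply Hr, (proj2_sig y)).
  set (g := fun y : real L => let p := exist (in_real L) (r (proj1_sig y)) (Hgin y) in
    exist Ps p (proj2 (HPs p) (Hr _ (proj2_sig y)))).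
  split; [intros U HU; exists U; split; auto; tauto|].
  exists g. split; [|split].
  - apply cont_retraction with r; auto.
  - apply homotopic_sub with P K; auto.
    + intros x. simpl. rewrite HK0; auto. apply HPs, proj2_sig.
    + intros x. simpl. rewrite HK1; auto. apply HPs, proj2_sig.
  - apply homotopic_real with (fun x t => H x (1 - t)).
    + apply htpy_cont_rev; auto.
    + intros x t Hx Ht. apply HHp; auto; lra.
    + intros y. simpl. rewrite Rminus_0_r, HH1; auto. apply proj2_sig.
    + intros y. simpl. rewrite Rminus_diag, HH0; auto. apply proj2_sig.
Qed.
End Realization.

Section RealContinuity.
Context {V : Type}.
Definition rcont (D : (V -> R) -> Prop) (x0 : V -> R) (u0 : R) (f : (V -> R) -> R -> R) :=
  forall eps, 0 < eps -> exists e, 0 < e /\ forall q u, D q -> close x0 q e -> Rabs (u - u0) < e ->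
    Rabs (f q u - f x0 u0) < eps.

Variable D : (V -> R) -> Prop.
Variable x0 : V -> R.
Variable u0 : R.

Lemma rcont_const c : rcont D x0 u0 (fun _ _ => c).
Proof. intros eps Heps. exists 1; split; [lra|]. intros. rewrite Rminus_diag, Rabs_R0; auto. Qed.
Lemma rcont_coord v : rcont D x0 u0 (fun q _ => q v).
Proof. intros eps Heps. exists eps; split; auto. intros q u _ Hc _. specialize (Hc v). rewrite Rabs_minus_sym; auto. Qed.
Lemma rcont_param : rcont D x0 u0 (fun _ u => u).
Proof. intros eps Heps. exists eps; split; auto. Qed.

Lemma rcont_plus f g : rcont D x0 u0 f -> rcont D x0 u0 g -> rcont D x0 u0 (fun q u => f q u + g q u).
Proof. intros Hf Hg eps Heps. destruct (Hf (eps/2) ltac:(lra)) as [e1 [He1 H1]]. destruct (Hg (eps/2) ltac:(lra)) as [e2 [He2 H2]].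
 exists (Rmin e1 e2). split. apply Rmin_glb_lt; auto. intros q u Hq Hc Hu.
 assert (A1 := H1 q u Hq (close_mono _ _ _ _ (Rmin_l _ _) Hc) (Rlt_le_trans _ _ _ Hu (Rmin_l _ _))).
 assert (A2 := H2 q u Hq (close_mono _ _ _ _ (Rmin_r _ _) Hc) (Rlt_le_trans _ _ _ Hu (Rmin_r _ _))).
 replace (f q u + g q u - (f x0 u0 + g x0 u0)) with ((f q u - f x0 u0) + (g q u - g x0 u0)) by ring.
 eapply Rle_lt_trans. apply Rabs_triang. lra. Qed.

Lemma rcont_opp f : rcont D x0 u0 f -> rcont D x0 u0 (fun q u => - f q u).
Proof. intros Hf eps Heps. destruct (Hf eps Heps) as [e [He H]]. exists e; split; auto. intros q u Hq Hc Hu.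
 replace (- f q u - - f x0 u0) with (- (f q u - f x0 u0)) by ring. rewrite Rabs_Ropp; auto. Qed.

Lemma rcont_minus f g : rcont D x0 u0 f -> rcont D x0 u0 g -> rcont D x0 u0 (fun q u => f q u - g q u).
Proof. intros Hf Hg. apply rcont_plus; auto. apply rcont_opp; auto. Qed.

Lemma rcont_mult f g : rcont D x0 u0 f -> rcont D x0 u0 g -> rcont D x0 u0 (fun q u => f q u * g q u).
Proof. intros Hf Hg eps Heps.
 set (A := Rabs (f x0 u0)). set (B := Rabs (g x0 u0)).
 assert (HA : 0 <= A) by apply Rabs_pos. assert (HB : 0 <= B) by apply Rabs_pos.
 set (d := Rmin 1 (eps / 2 / (A + B + 1))).
 assert (Hd : 0 < d). { apply Rmin_glb_lt; [lra|]. apply Rdiv_lt_0_compat; lra. }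
 destruct (Hf d Hd) as [e1 [He1 H1]]. destruct (Hg d Hd) as [e2 [He2 H2]].
 exists (Rmin e1 e2). split. apply Rmin_glb_lt; auto. intros q u Hq Hc Hu.
 assert (A1 := H1 q u Hq (close_mono _ _ _ _ (Rmin_l _ _) Hc) (Rlt_le_trans _ _ _ Hu (Rmin_l _ _))).
 assert (A2 := H2 q u Hq (close_mono _ _ _ _ (Rmin_r _ _) Hc) (Rlt_le_trans _ _ _ Hu (Rmin_r _ _))).
 replace (f q u * g q u - f x0 u0 * g x0 u0) with ((f q u - f x0 u0) * (g q u - g x0 u0) + (f q u - f x0 u0) * g x0 u0 + f x0 u0 * (g q u - g x0 u0)) by ring.
 assert (Hd1 : d <= 1) by apply Rmin_l.
 assert (Hd2 : d * (A + B + 1) <= eps / 2).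
 { unfold d. eapply Rle_trans. apply Rmult_le_compat_r; [lra|apply Rmin_r]. right; field; lra. }
 eapply Rle_lt_trans. apply Rabs_triang. eapply Rle_lt_trans. apply Rplus_le_compat_r. apply Rabs_triang.
 rewrite !Rabs_mult. fold A B.
 assert (Rabs (f q u - f x0 u0) * Rabs (g q u - g x0 u0) <= d * d).
 { apply Rmult_le_compat; try apply Rabs_pos; lra. }
 assert (Rabs (f q u - f x0 u0) * B <= d * B) by (apply Rmult_le_compat_r; lra).
 assert (A * Rabs (g q u - g x0 u0) <= A * d) by (apply Rmult_le_compat_l; lra).
 assert (d * d <= d * 1) by (apply Rmult_le_compat_l; lra).
 assert (d * d + d * B + A * d < eps) by nra. lra. Qed.

Lemma rcont_inv f : rcont D x0 u0 f -> f x0 u0 <> 0 -> rcont D x0 u0 (fun q u => / f q u).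
Proof. intros Hf Hne eps Heps. set (A := Rabs (f x0 u0)). assert (HA : 0 < A) by (apply Rabs_pos_lt; auto).
 set (d := Rmin (A / 2) (eps * A * A / 2)).
 assert (HeA : 0 < eps * A * A) by (repeat apply Rmult_lt_0_compat; lra).
 assert (Hd : 0 < d). { apply Rmin_glb_lt; lra. }
 destruct (Hf d Hd) as [e [He H]]. exists e; split; auto. intros q u Hq Hc Hu. specialize (H q u Hq Hc Hu).
 assert (Hd1 : d <= A / 2) by apply Rmin_l. assert (Hd2 : d <= eps * A * A / 2) by apply Rmin_r.
 assert (HB : A / 2 <= Rabs (f q u)).
 { pose proof (Rabs_triang_inv (f x0 u0) (f x0 u0 - f q u)). replace (f x0 u0 - (f x0 u0 - f q u)) with (f q u) in H0 by ring.
   rewrite Rabs_minus_sym in H0. fold A in H0. lra. }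
 assert (Hfq : f q u <> 0). { intros Hz. rewrite Hz, Rabs_R0 in HB. lra. }
 replace (/ f q u - / f x0 u0) with ((f x0 u0 - f q u) / (f q u * f x0 u0)) by (field; auto).
 unfold Rdiv. rewrite Rabs_mult, Rabs_inv, Rabs_mult. fold A. rewrite Rabs_minus_sym.
 apply Rmult_lt_reg_r with (Rabs (f q u) * A). apply Rmult_lt_0_compat; lra.
 rewrite Rmult_assoc, Rinv_l by (apply Rmult_integral_contrapositive; split; lra). rewrite Rmult_1_r.
 assert (eps * (A / 2 * A) <= eps * (Rabs (f q u) * A)). { apply Rmult_le_compat_l; [lra|]. apply Rmult_le_compat_r; lra. }
 nra. Qed.

Lemma rcont_div f g : rcont D x0 u0 f -> rcont D x0 u0 g -> g x0 u0 <> 0 -> rcont D x0 u0 (fun q u => f q u / g q u).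
Proof. intros Hf Hg Hne. unfold Rdiv. apply rcont_mult; auto. apply rcont_inv; auto. Qed.

Lemma Rmin_dist a b c d : Rabs (Rmin a b - Rmin c d) <= Rmax (Rabs (a - c)) (Rabs (b - d)).
Proof. unfold Rmin, Rmax. repeat destruct Rle_dec; apply Rabs_le;
 try (pose proof (Rabs_le_inv _ _ (Rle_refl (Rabs (a - c))))); try (pose proof (Rabs_le_inv _ _ (Rle_refl (Rabs (b - d))))); lra. Qed.
Lemma Rmax_dist a b c d : Rabs (Rmax a b - Rmax c d) <= Rmax (Rabs (a - c)) (Rabs (b - d)).
Proof. unfold Rmax at 1 2. repeat destruct Rle_dec; apply Rabs_le;
 pose proof (Rabs_le_inv _ _ (Rle_refl (Rabs (a - c)))); pose proof (Rabs_le_inv _ _ (Rle_refl (Rabs (b - d))));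
 pose proof (Rmax_l (Rabs (a - c)) (Rabs (b - d))); pose proof (Rmax_r (Rabs (a - c)) (Rabs (b - d))); lra. Qed.

Lemma rcont_min f g : rcont D x0 u0 f -> rcont D x0 u0 g -> rcont D x0 u0 (fun q u => Rmin (f q u) (g q u)).
Proof. intros Hf Hg eps Heps. destruct (Hf eps Heps) as [e1 [He1 H1]]. destruct (Hg eps Heps) as [e2 [He2 H2]].
 exists (Rmin e1 e2). split. apply Rmin_glb_lt; auto. intros q u Hq Hc Hu.
 assert (A1 := H1 q u Hq (close_mono _ _ _ _ (Rmin_l _ _) Hc) (Rlt_le_trans _ _ _ Hu (Rmin_l _ _))).
 assert (A2 := H2 q u Hq (close_mono _ _ _ _ (Rmin_r _ _) Hc) (Rlt_le_trans _ _ _ Hu (Rmin_r _ _))).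
 eapply Rle_lt_trans. apply Rmin_dist. unfold Rmax; destruct Rle_dec; auto. Qed.
Lemma rcont_max f g : rcont D x0 u0 f -> rcont D x0 u0 g -> rcont D x0 u0 (fun q u => Rmax (f q u) (g q u)).
Proof. intros Hf Hg eps Heps. destruct (Hf eps Heps) as [e1 [He1 H1]]. destruct (Hg eps Heps) as [e2 [He2 H2]].
 exists (Rmin e1 e2). split. apply Rmin_glb_lt; auto. intros q u Hq Hc Hu.
 assert (A1 := H1 q u Hq (close_mono _ _ _ _ (Rmin_l _ _) Hc) (Rlt_le_trans _ _ _ Hu (Rmin_l _ _))).
 assert (A2 := H2 q u Hq (close_mono _ _ _ _ (Rmin_r _ _) Hc) (Rlt_le_trans _ _ _ Hu (Rmin_r _ _))).
 eapply Rle_lt_trans. apply Rmax_dist. unfold Rmax at 1; destruct Rle_dec; auto. Qed.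

Lemma rcont_sumL (F : V -> (V -> R) -> R -> R) l : (forall v, In v l -> rcont D x0 u0 (F v)) ->
  rcont D x0 u0 (fun q u => sumL (fun v => F v q u) l).
Proof. induction l as [|a l IH]; intros H. exact (rcont_const 0).
 change (rcont D x0 u0 (fun q u => F a q u + sumL (fun v => F v q u) l)). apply rcont_plus. apply H; left; auto.
 apply IH; intros; apply H; right; auto. Qed.

Lemma rcont_minL (F : V -> (V -> R) -> R -> R) l : (forall v, In v l -> rcont D x0 u0 (F v)) ->
  rcont D x0 u0 (fun q u => minL (fun v => F v q u) l).
Proof. destruct l as [|a l]; intros H. exact (rcont_const 0). simpl.
 induction l as [|b l IH]; simpl. apply H; left; auto.
 apply rcont_min. apply H; right; left; auto. apply IH. intros v [<-|Hv]. apply H; left; auto. apply H; right; right; auto. Qed.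

Lemma rcont_gt_near f c : rcont D x0 u0 f -> c < f x0 u0 -> exists e, 0 < e /\ forall q u, D q -> close x0 q e -> Rabs (u - u0) < e -> c < f q u.
Proof. intros Hf Hc. destruct (Hf (f x0 u0 - c) ltac:(lra)) as [e [He H]]. exists e; split; auto.
 intros q u Hq Hcl Hu. specialize (H q u Hq Hcl Hu). apply Rabs_lt_inv in H. lra. Qed.
Lemma rcont_lt_near f c : rcont D x0 u0 f -> f x0 u0 < c -> exists e, 0 < e /\ forall q u, D q -> close x0 q e -> Rabs (u - u0) < e -> f q u < c.
Proof. intros Hf Hc. destruct (Hf (c - f x0 u0) ltac:(lra)) as [e [He H]]. exists e; split; auto.
 intros q u Hq Hcl Hu. specialize (H q u Hq Hcl Hu). apply Rabs_lt_inv in H. lra. Qed.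

Lemma rcont_uniform (F : V -> (V -> R) -> R -> R) l : (forall v, In v l -> rcont D x0 u0 (F v)) ->
  forall eps, 0 < eps -> exists e, 0 < e /\ forall q u, D q -> close x0 q e -> Rabs (u - u0) < e ->
    forall v, In v l -> Rabs (F v q u - F v x0 u0) < eps.
Proof. induction l as [|a l IH]; intros H eps Heps. exists 1; split; [lra|]. intros ? ? ? ? ? v [].
 destruct (IH (fun v Hv => H v (or_intror Hv)) eps Heps) as [e1 [He1 H1]].
 destruct (H a (or_introl eq_refl) eps Heps) as [e2 [He2 H2]].
 exists (Rmin e1 e2). split. apply Rmin_glb_lt; auto. intros q u Hq Hc Hu v [<-|Hv].
 apply H2; auto. eapply close_mono; [apply Rmin_r|]; eauto. eapply Rlt_le_trans; [eauto|apply Rmin_r].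
 apply H1; auto. eapply close_mono; [apply Rmin_l|]; eauto. eapply Rlt_le_trans; [eauto|apply Rmin_l]. Qed.

End RealContinuity.

Definition clamp (t : R) : R := Rmax 0 (Rmin 1 t).
Lemma clamp_in t : 0 <= clamp t <= 1.
Proof. unfold clamp, Rmax, Rmin. repeat destruct Rle_dec; lra. Qed.
Lemma clamp_id t : 0 <= t <= 1 -> clamp t = t.
Proof. unfold clamp, Rmax, Rmin. repeat destruct Rle_dec; lra. Qed.
Definition clampI (t : R) : I01 := exist _ (clamp t) (clamp_in t).

Section Contraction.
Context {V : Type}.
Variable K : (V -> Prop) -> Prop.

Definition contraction_cont (c : (V -> R) -> R -> (V -> R)) : Prop :=
  forall y t, in_real K y -> 0 <= t <= 1 -> forall O, rel_open K O -> O (c y t) ->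
    exists N, rel_open K N /\ N y /\ exists d, 0 < d /\
      forall y' t', N y' -> 0 <= t' <= 1 -> Rabs (t' - t) < d -> O (c y' t').

Definition contraction (c : (V -> R) -> R -> (V -> R)) (y0 : V -> R) : Prop :=
  in_real K y0 /\ (forall y t, in_real K y -> in_real K (c y t)) /\
  (forall y, in_real K y -> c y 0 = y) /\ (forall y, in_real K y -> c y 1 = y0) /\ contraction_cont c.

Lemma contraction_of_contractible : contractible (weak_top K) -> exists c y0, contraction c y0.
Proof.
  intros [x0 [H [Hc Hends]]].
  set (c := fun y t => match excluded_middle_informative (in_real K y) with
                       | left h => proj1_sig (H (exist _ y h, clampI t)) | right _ => y end).
  exists c, (proj1_sig x0). split; [|split; [|split; [|split]]].
  - apply (proj2_sig x0).
  - intros y t hy. unfold c. destruct excluded_middle_informative; [|contradiction]. apply (proj2_sig (H _)).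
  - intros y hy. unfold c. destruct excluded_middle_informative as [h|]; [|contradiction].
    destruct (Hends (exist _ y h) (clampI 0)) as [H0 _]. specialize (H0 ltac:(simpl; apply clamp_id; lra)).
    apply (f_equal (@proj1_sig _ _)) in H0. exact H0.
  - intros y hy. unfold c. destruct excluded_middle_informative as [h|]; [|contradiction].
    destruct (Hends (exist _ y h) (clampI 1)) as [_ H1]. specialize (H1 ltac:(simpl; apply clamp_id; lra)).
    apply (f_equal (@proj1_sig _ _)) in H1. exact H1.
  - intros y t hy Ht O HO Oc. unfold c in Oc. destruct excluded_middle_informative as [h|]; [|contradiction].
    assert (HU : weak_top K (fun p => O (proj1_sig p))) by (apply rel_open_weak_top; auto).
    destruct (Hc _ HU (exist _ y h) (clampI t) Oc) as [U' [HU' [U'y [eps [Heps Hf]]]]].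
    exists (coord_set K U'). split; [apply weak_top_rel_open; auto|]. split. exists h; auto.
    exists eps; split; auto. intros y' t' [h' Hy'] Ht' Hd. unfold c.
    destruct excluded_middle_informative as [h''|]; [|contradiction].
    replace h'' with h' by apply proof_irrelevance.
    apply (Hf (exist _ y' h') (clampI t')); auto. simpl. rewrite !clamp_id; auto.
Qed.
End Contraction.

Section Join.
Context {V : Type}.
Variable L : (V -> Prop) -> Prop.
Hypothesis HL : is_complex L.
Variable sig : V -> Prop.
Variable ls : list V.
Hypothesis Hls : NoDup ls /\ forall v, sig v <-> In v ls.
Hypothesis Hsig : L sig.

Definition cell_dec (v : V) := excluded_middle_informative (sig v).
Definition join (a : V -> R) (b : R) (w : V -> R) : V -> R := fun v => if cell_dec v then a v else b * w v.
Definition join_weights (a : V -> R) (b : R) : Prop := (forall v, In v ls -> 0 <= a v) /\ 0 <= b /\ sumL a ls + b = 1.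

Lemma link_in_real w : in_real (link L sig) w -> L (supp w) /\ (forall v, supp w v -> ~ sig v) /\ exists rho, L rho /\ subset (supp w) rho /\ subset sig rho.
Proof. intros Hw. apply in_real_simplex in Hw. exact Hw. Qed.

Lemma simplex_ne : exists v, sig v.
Proof. destruct HL as [H _]. apply (H sig Hsig). Qed.

Lemma join_weights_le1 a b : join_weights a b -> b <= 1.
Proof. intros [H1 [H2 H3]]. assert (0 <= sumL a ls) by (apply sumL_nonneg; auto). lra. Qed.

Lemma join_real a b w : join_weights a b -> in_real (link L sig) w ->
  in_real L (join a b w) /\ subset (supp (join a b w)) (fun v => sig v \/ supp w v).
Proof.
  intros [Ha [Hb Hsum]] Hw. destruct (link_in_real w Hw) as [HLw [Hdis [rho [Hrho [Hwr Hsr]]]]].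
  assert (Hsub : subset (supp (join a b w)) (fun v => sig v \/ supp w v)).
  { intros v Hv. unfold supp, join in *. destruct (cell_dec v); auto. right. intros Hz; apply Hv; rewrite Hz; ring. }
  destruct (in_real_list (link L sig) w Hw) as [lw [Hnw [Hcw Hsw]]].
  destruct (NoDup_filter_ex (fun v => ~ sig v) lw) as [lw' [Hnw' Hiw']].
  assert (Hnn : forall v, 0 <= join a b w v).
  { intros v. unfold join. destruct (cell_dec v) as [Hs|Hs]. apply Ha, Hls; auto. apply Rmult_le_pos; auto. apply in_real_nonneg with (link L sig); auto. }
  assert (Hdisj : forall v, In v ls -> ~ In v lw').
  { intros v H1 H2. apply Hiw' in H2. destruct H2 as [_ H2]. apply H2, Hls; auto. }
  assert (Hsum' : sumL (join a b w) (ls ++ lw') = 1).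
  { assert (E1 : sumL (join a b w) ls = sumL a ls).
    { apply sumL_ext. intros v Hv. unfold join. destruct (cell_dec v); auto. exfalso; apply n, Hls; auto. }
    assert (E2 : sumL (join a b w) lw' = sumL (fun v => b * w v) lw').
    { apply sumL_ext. intros v Hv. unfold join. destruct (cell_dec v); auto. apply Hiw' in Hv. tauto. }
    assert (E3 : sumL w lw' = 1).
    { apply (in_real_sum (link L sig) w lw' Hw Hnw'). intros v Hv. apply Hcw in Hv as Hv'. apply Hiw'. split; [exact Hv'|apply Hdis; exact Hv]. }
    rewrite sumL_app, E1, E2, sumL_scal, E3. lra. }
  split; auto. split; auto. split.
  - apply (complex_face L HL) with rho; auto.
    + apply NNPP; intro Hn. assert (sumL (join a b w) (ls ++ lw') = 0).
      { apply sumL_zero. intros v _. apply NNPP; intro; apply Hn; exists v; auto. } lra.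
    + intros v Hv. destruct (Hsub v Hv); auto.
  - exists (ls ++ lw'). split; [|split; auto].
    + apply NoDup_app; [apply Hls | exact Hnw' | exact Hdisj].
    + intros v Hv. apply in_or_app. destruct (Hsub v Hv) as [Hs|Hs]. left; apply Hls; auto.
      right. apply Hiw'. split; [auto|apply Hdis; exact Hs].
Qed.

Definition weights_near (a0 : V -> R) (b0 eta : R) (a : V -> R) (b : R) : Prop :=
  (forall v, In v ls -> Rabs (a v - a0 v) <= eta) /\ Rabs (b - b0) <= eta.

Lemma weights_near_mono a0 b0 eta eta' a b : eta <= eta' -> weights_near a0 b0 eta a b -> weights_near a0 b0 eta' a b.
Proof. intros Hle [Ha Hb]. split; [intros v Hv; specialize (Ha v Hv)|]; lra. Qed.

Lemma join_close a b w a' b' w' e : join_weights a b -> in_real (link L sig) w' ->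
  (forall v, In v ls -> Rabs (a v - a' v) < e) -> Rabs (b - b') < e -> close w w' e ->
  close (join a b w) (join a' b' w') (2 * e).
Proof. intros Hv Hw' Ha Hb Hc v. unfold join. destruct (cell_dec v) as [Hs|Hs].
 - assert (Rabs (a v - a' v) < e) by (apply Ha, Hls; auto). assert (0 <= e) by (pose proof (Rabs_pos (a v - a' v)); lra). lra.
 - replace (b * w v - b' * w' v) with ((b - b') * w' v + b * (w v - w' v)) by ring.
   eapply Rle_lt_trans. apply Rabs_triang. rewrite !Rabs_mult.
   assert (0 <= w' v <= 1) by (split; [apply in_real_nonneg with (link L sig) | apply in_real_le1 with (link L sig)]; auto).
   assert (0 <= b <= 1) by (split; [apply Hv | apply join_weights_le1 with a; auto]).
   rewrite (Rabs_right (w' v)) by lra. rewrite (Rabs_right b) by lra.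
   specialize (Hc v). assert (Rabs (b - b') * w' v <= Rabs (b - b') * 1) by (apply Rmult_le_compat_l; [apply Rabs_pos|lra]).
   assert (b * Rabs (w v - w' v) <= 1 * Rabs (w v - w' v)) by (apply Rmult_le_compat_r; [apply Rabs_pos|lra]).
   lra. Qed.

Lemma join_weights_not_near a b : ~ join_weights a b -> exists e, 0 < e /\
  forall a' b', (forall v, In v ls -> Rabs (a' v - a v) < e) -> Rabs (b' - b) < e -> ~ join_weights a' b'.
Proof.
  intros Hn.
  assert (Hcase : (exists v, In v ls /\ a v < 0) \/ b < 0 \/ sumL a ls + b <> 1).
  { apply NNPP; intro Hc. apply Hn. split; [|split].
    - intros v Hv. apply Rnot_lt_le. intro Hlt. apply Hc. left; exists v; auto.
    - apply Rnot_lt_le. intro Hlt. apply Hc; right; left; auto.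
    - apply NNPP; intro Hne; apply Hc; right; right; auto. }
  destruct Hcase as [[v [Hv Hneg]]|[Hneg|Hne]].
  - exists (- a v). split; [lra|]. intros a' b' Ha _ [Ha' _].
    specialize (Ha v Hv). specialize (Ha' v Hv). apply Rabs_lt_inv in Ha. lra.
  - exists (- b). split; [lra|]. intros a' b' _ Hb [_ [Hb' _]]. apply Rabs_lt_inv in Hb. lra.
  - set (pack := fun (a : V -> R) (b : R) (o : option V) => match o with Some v => a v | None => b end).
    assert (Hsum : forall a b, sumL (pack a b) (None :: map Some ls) = b + sumL a ls).
    { intros a' b'. rewrite sumL_cons, sumL_map. reflexivity. }
    destruct (sumL_neq_near (pack a b) (None :: map Some ls) 1) as [e [He Hf]]; [rewrite Hsum; lra|].
    exists e. split; auto. intros a' b' Ha Hb [_ [_ Hs']].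
    apply (Hf (pack a' b')); [|rewrite Hsum; lra].
    intros [v|] Ho; simpl; auto.
    destruct Ho as [Ho|Ho]; [discriminate|]. apply in_map_iff in Ho as [w [Hw Hw']].
    injection Hw as ->. apply Ha; auto.
Qed.

Lemma join_cont_at Om a b w F : rel_open L Om -> link L sig F -> join_weights a b ->
  in_real (link L sig) w -> subset (supp w) F -> Om (join a b w) ->
  exists e, 0 < e /\ forall a' b' w', join_weights a' b' -> (forall v, In v ls -> Rabs (a' v - a v) < e) ->
    Rabs (b' - b) < e -> in_real (link L sig) w' -> subset (supp w') F -> close w w' e -> Om (join a' b' w').
Proof.
  intros [_ HOm] [_ [_ [rhoF [HrF [HFr HsrF]]]]] Hv Hw HwF Hj.
  set (S := fun v => sig v \/ F v).
  assert (HS : L S).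
  { apply (complex_face L HL) with rhoF; auto.
    - destruct simplex_ne as [v Hv']; exists v; left; auto.
    - intros v [Hv'|Hv']; auto. }
  destruct (join_real a b w Hv Hw) as [Hr Hs].
  destruct (HOm S HS _ Hj) as [eps [Heps Hf]].
  { intros v Hv'. destruct (Hs v Hv') as [H|H]; [left; auto|right; apply HwF; auto]. }
  exists (eps / 2). split; [lra|]. intros a' b' w' Hv' Ha Hb Hw' HwF' Hc.
  destruct (join_real a' b' w' Hv' Hw') as [Hr' Hs'].
  apply Hf; auto.
  - intros v Hv''. destruct (Hs' v Hv'') as [H|H]; [left; auto|right; apply HwF'; auto].
  - replace eps with (2 * (eps / 2)) by field. apply join_close; auto.
    + intros v Hvl. rewrite Rabs_minus_sym. apply Ha; auto.
    + rewrite Rabs_minus_sym. apply Hb.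
Qed.

Definition join_stable (Om : (V -> R) -> Prop) a0 b0 eta (w : V -> R) : Prop :=
  in_real (link L sig) w /\ forall a b, join_weights a b -> weights_near a0 b0 eta a b -> Om (join a b w).

(* The weights (a, b) are packed into one function on [option V], so that compactness of the
   eta-box of weights around (a0, b0) makes [join_stable] open in the link. *)
Lemma rel_open_join_stable Om a0 b0 eta : rel_open L Om -> rel_open (link L sig) (join_stable Om a0 b0 eta).
Proof.
  intros HOm.
  split; [intros p [Hp _]; auto|].
  intros F HF w1 [Hw1 Hw1O] Hsub1.
  set (idx := None :: map Some ls).
  set (P0 := fun o : option V => match o with Some v => a0 v | None => b0 end).
  set (aP := fun (P : option V -> R) v => P (Some v)).
  set (Fp := fun e (P : option V -> R) => join_weights (aP P) (P None) ->
       forall w', in_real (link L sig) w' -> subset (supp w') F -> close w1 w' e -> Om (join (aP P) (P None) w')).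
  assert (Hin : forall v, In (Some v) idx <-> In v ls).
  { intros v. unfold idx. simpl. rewrite in_map_iff. split. intros [H|[x [H1 H2]]]; [discriminate|]. injection H1; intros ->; auto.
    intros H; right; exists v; auto. }
  destruct (uniform_on_box idx (fun o => P0 o - eta) (fun o => P0 o + eta) P0 Fp) as [es [Hes Hfs]].
  - intros e e' P He' HF' Hv w' Hw' Hs' Hc. apply HF'; auto. eapply close_mono; [|eauto]; lra.
  - intros P HP. destruct (classic (join_weights (aP P) (P None))) as [HvP|HnvP].
    + assert (HbP : weights_near a0 b0 eta (aP P) (P None)).
      { destruct HP as [HP _]. split.
        intros v Hv. assert (In (Some v) idx) by (apply Hin; auto). specialize (HP _ H). unfold aP, P0 in *. apply Rabs_le; lra.
        assert (In None idx) by (left; auto). specialize (HP _ H). unfold P0 in HP. apply Rabs_le; lra. }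
      destruct (join_cont_at Om (aP P) (P None) w1 F HOm HF HvP Hw1 Hsub1 (Hw1O _ _ HvP HbP))
        as [e [He Hf]].
      exists e. split; auto. intros P' _ Hd HvP' w' Hw' Hs' Hc. apply Hf; auto.
      * intros v Hv. apply Hd, Hin; auto.
      * apply Hd; left; auto.
    + destruct (join_weights_not_near (aP P) (P None) HnvP) as [e [He Hne]].
      exists e. split; auto. intros P' _ Hd HvP'. exfalso. apply (Hne (aP P') (P' None)); auto.
      * intros v Hv. apply Hd, Hin; auto.
      * apply Hd; left; auto.
  - exists es. split; auto. intros w' Hw' Hs' Hc. split; auto.
    intros a b Hvld Hp.
    set (P := fun o : option V => match o with Some v => if excluded_middle_informative (In v ls) then a v else a0 v | None => b end).
    assert (HaP : forall v, In v ls -> aP P v = a v).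
    { intros v Hv. unfold aP, P. destruct excluded_middle_informative; tauto. }
    assert (Hcomb : join (aP P) (P None) w' = join a b w').
    { apply functional_extensionality; intro v. unfold join. destruct (cell_dec v) as [Hs|Hs]; auto. apply HaP, Hls; auto. }
    rewrite <- Hcomb. apply (Hfs P).
    + destruct Hp as [Hpa Hpb]. split.
      * intros o Ho. destruct o as [v|]. assert (Hv' : In v ls) by (apply Hin; auto).
        specialize (Hpa v Hv'). change (P (Some v)) with (aP P v). rewrite (HaP v Hv'). simpl (P0 (Some v)).
        apply Rabs_le_inv in Hpa. lra.
        simpl. unfold P0. apply Rabs_le_inv in Hpb. lra.
      * intros o Ho. destruct o as [v|]. simpl. destruct excluded_middle_informative; auto. exfalso; apply Ho, Hin; auto.
        exfalso; apply Ho; left; auto.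
    + destruct Hvld as [Hva [Hvb Hvs]]. split; [|split].
      intros v Hv. rewrite HaP; auto. simpl; auto.
      rewrite (sumL_ext (aP P) a ls); auto.
    + auto.
    + auto.
    + auto.
Qed.

Lemma join_cont (Om : (V -> R) -> Prop) a0 b0 w0 : rel_open L Om -> join_weights a0 b0 -> in_real (link L sig) w0 ->
  Om (join a0 b0 w0) -> exists O, rel_open (link L sig) O /\ O w0 /\ exists eta, 0 < eta /\
    forall w a b, O w -> join_weights a b -> weights_near a0 b0 eta a b -> Om (join a b w).
Proof.
  intros HOm Hv0 Hw0 Om0.
  destruct (link_in_real w0 Hw0) as [HLw0 [Hdis0 [rho0 [Hrho0 [Hwr0 Hsr0]]]]].
  set (S0 := fun v => sig v \/ supp w0 v).
  assert (HS0 : L S0).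
  { apply (complex_face L HL) with rho0; auto. destruct simplex_ne as [v Hv]; exists v; left; auto.
    intros v [Hv|Hv]; auto. }
  destruct (join_real a0 b0 w0 Hv0 Hw0) as [Hr0 Hs0].
  destruct (proj2 HOm S0 HS0 _ Om0 Hs0) as [eps0 [Heps0 Hf0]].
  exists (join_stable Om a0 b0 (eps0 / 4)). split; [apply rel_open_join_stable; auto|]. split.
  - split; auto. intros a b Hv [Hpa Hpb]. destruct (join_real a b w0 Hv Hw0) as [Hr Hs].
    apply Hf0; auto. apply close_mono with (2 * (eps0 / 3)); [lra|]. apply join_close; auto.
    + intros v Hv'. specialize (Hpa v Hv'). rewrite Rabs_minus_sym. lra.
    + rewrite Rabs_minus_sym. lra.
    + apply close_refl; lra.
  - exists (eps0 / 4); split; [lra|]. intros w a b [_ Hw] Hv Hp. apply Hw; auto.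
Qed.
End Join.

Section Filtration.
Context {V : Type}.
Variable L L0 : (V -> Prop) -> Prop.
Hypothesis HL : is_complex L.
Hypothesis HL0 : is_subcomplex L0 L.

Definition outside_L0 (x : V -> R) := in_real L x /\ ~ L0 (supp x).

Lemma subcomplex_face s t : L0 s -> (exists v, t v) -> subset t s -> L0 t.
Proof. destruct HL0 as [[_ H] _]. apply H. Qed.

Lemma rel_open_outside_L0 : rel_open L outside_L0.
Proof. split. intros p [h _]; auto.
 intros s Hs p [Hp Hn] Hsub. destruct (supp_incl_near L p Hp) as [e [He Hf]].
 exists e; split; auto. intros q Hq Hqs Hc. split; auto. intros H0. apply Hn.
 apply subcomplex_face with (supp q); auto. apply in_real_supp_ne with L; auto. Qed.

Definition card_le (s : V -> Prop) (m : nat) : Prop := exists l : list V, (length l <= m)%nat /\ forall v, s v -> In v l.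

(* The set W_m of the header. *)
Definition off_skel (m : nat) (x : V -> R) : Prop := in_real L x /\ (~ L0 (supp x) \/ ~ card_le (supp x) m).

Lemma rel_open_off_skel m : rel_open L (off_skel m).
Proof. split. intros p [h _]; auto.
 intros s Hs p [Hp Hn] Hsub. destruct (supp_incl_near L p Hp) as [e [He Hf]].
 exists e; split; auto. intros q Hq Hqs Hc. split; auto.
 apply NNPP; intros Hnn. apply not_or_and in Hnn. destruct Hnn as [H1 H2]. apply NNPP in H1. apply NNPP in H2.
 destruct Hn as [Hn|Hn]; apply Hn.
 - apply subcomplex_face with (supp q); auto. apply in_real_supp_ne with L; auto.
 - destruct H2 as [l [Hl Hin]]. exists l; split; auto. intros v Hv; apply Hin, Hf; auto. Qed.

Lemma off_skel_0 : off_skel 0 = in_real L.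
Proof. apply functional_extensionality; intro x. apply propositional_extensionality. split.
 intros [h _]; auto. intros h. split; auto. right. intros [l [Hl Hin]].
 destruct (in_real_supp_ne L x h) as [v Hv]. specialize (Hin v Hv). destruct l; simpl in *; [auto|lia]. Qed.

Lemma off_skel_dim n : (forall s, L s -> card_le s n) -> off_skel n = outside_L0.
Proof. intros Hn. apply functional_extensionality; intro x. apply propositional_extensionality. split.
 - intros [h [H|H]]; split; auto. exfalso; apply H. apply Hn. apply (in_real_simplex L x h).
 - intros [h H]; split; auto. Qed.

Lemma heq_incl_off_skel (step : forall k, heq_incl L (off_skel (S k)) (off_skel k)) k :
  heq_incl L (off_skel k) (in_real L).
Proof.
  rewrite <- off_skel_0. induction k.
  - apply heq_incl_refl, rel_open_off_skel.
  - apply heq_incl_trans with (off_skel k); auto; apply rel_open_off_skel.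
Qed.

Lemma not_in_sub_iff p : not_in_sub L L0 p <-> outside_L0 (proj1_sig p).
Proof. unfold not_in_sub, outside_L0. split; [intros H; split; auto; apply proj2_sig | tauto]. Qed.

Section PushOff.
Hypothesis Hlink : forall sigma, L0 sigma -> contractible (weak_top (link L sigma)).
Variable k : nat.

Definition card_eq (s : V -> Prop) (n : nat) : Prop := exists l, NoDup l /\ length l = n /\ forall v, s v <-> In v l.

Definition verts (s : V -> Prop) : list V :=
  match excluded_middle_informative (exists l, NoDup l /\ forall v, s v <-> In v l) with
  | left h => proj1_sig (constructive_indefinite_description _ h) | right _ => nil end.

Lemma verts_spec s : (exists l, NoDup l /\ forall v, s v <-> In v l) -> NoDup (verts s) /\ forall v, s v <-> In v (verts s).
Proof. intros h. unfold verts. destruct excluded_middle_informative as [h'|]; [|contradiction].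
 destruct (constructive_indefinite_description _ h') as [l Hl]; simpl; auto. Qed.

Lemma verts_card s n : card_eq s n -> NoDup (verts s) /\ (forall v, s v <-> In v (verts s)) /\ length (verts s) = n.
Proof. intros [l [Hn [Hlen Hi]]]. destruct (verts_spec s) as [H1 H2]. exists l; auto.
 split; auto. split; auto. rewrite <- Hlen. apply Permutation_length. apply NoDup_Permutation; auto.
 intros v. rewrite <- H2, Hi. tauto. Qed.

Lemma subcomplex_simplex s : L0 s -> L s.
Proof. destruct HL0 as [_ H]; auto. Qed.

Definition kcell (s : V -> Prop) := L0 s /\ card_eq s (S k).

Definition contr_data (s : V -> Prop) (p : ((V -> R) -> R -> (V -> R)) * (V -> R)) : Prop :=
  L0 s -> contraction (link L s) (fst p) (snd p).
Lemma contr_data_ex s : exists p, contr_data s p.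
Proof. destruct (classic (L0 s)) as [H|H].
 - destruct (contraction_of_contractible (link L s) (Hlink s H)) as [c [y0 Hc]]. exists (c, y0). intros _; auto.
 - exists ((fun y _ => y), (fun _ => 0)). intros H'; contradiction. Qed.
Definition contr_choice (s : V -> Prop) := proj1_sig (constructive_indefinite_description _ (contr_data_ex s)).
Definition link_contr (s : V -> Prop) := fst (contr_choice s).
Definition link_base (s : V -> Prop) := snd (contr_choice s).
Lemma link_contr_spec s : L0 s -> contraction (link L s) (link_contr s) (link_base s).
Proof. intros H. unfold link_contr, link_base, contr_choice. destruct (constructive_indefinite_description _ (contr_data_ex s)) as [p Hp]. simpl. apply Hp; auto. Qed.

(* Near the cell s, x = join s x (out_mass s x) (link_dir s x): its coordinates on s plus the
   weight [out_mass s x] on a point of link(s).  [push s x u] rescales the coordinates on s,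
   raises the outer weight by u * gap / 2 and moves the link point along the contraction,
   reaching the base point as soon as u * gap >= out_mass; this makes [push] continuous where
   the outer weight vanishes. *)
Definition in_mass (s : V -> Prop) (x : V -> R) := sumL x (verts s).
Definition out_mass s x := 1 - in_mass s x.
Definition min_coord s x := minL x (verts s).

Definition near_cell_closed s x := kcell s /\ out_mass s x <= min_coord s x / 2.
Definition near_cell s x := kcell s /\ out_mass s x < min_coord s x / 2.

Definition gap s x := Rmax 0 (min_coord s x / 2 - out_mass s x).
Definition pushed_out_mass s x u := out_mass s x + u * gap s x / 2.
Definition contr_time s x u := if Rlt_dec 0 (out_mass s x) then Rmin 1 (u * gap s x / out_mass s x) else 1.
Definition link_dir s x : V -> R :=
  if Rlt_dec 0 (out_mass s x) then (fun v => if cell_dec s v then 0 else x v / out_mass s x) else link_base s.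
Definition contr_dir s x u := link_contr s (link_dir s x) (contr_time s x u).
Definition shrink s x u := (1 - pushed_out_mass s x u) / (1 - out_mass s x).
Definition shrunk s x u : V -> R := fun v => shrink s x u * x v.
Definition push s x u := join s (shrunk s x u) (pushed_out_mass s x u) (contr_dir s x u).

Definition push_off (x : V -> R) (u : R) : V -> R :=
  match excluded_middle_informative (exists s, near_cell s x) with
  | left h => push (proj1_sig (constructive_indefinite_description _ h)) x u
  | right _ => x end.

Section CellCoords.
Variable s : V -> Prop.
Hypothesis Hs : kcell s.

Lemma kcell_verts : NoDup (verts s) /\ (forall v, s v <-> In v (verts s)) /\ length (verts s) = S k.
Proof. apply verts_card, Hs. Qed.
Lemma kcell_verts_spec : NoDup (verts s) /\ (forall v, s v <-> In v (verts s)).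
Proof. destruct kcell_verts as [A [B _]]; auto. Qed.
Lemma kcell_simplex : L s.
Proof. apply subcomplex_simplex, Hs. Qed.
Lemma kcell_verts_ne : verts s <> nil.
Proof. destruct kcell_verts as [_ [_ H]]. intros Hnil; rewrite Hnil in H; discriminate. Qed.

Variable x : V -> R.
Hypothesis Hx : in_real L x.

Lemma in_mass_bounds : 0 <= in_mass s x <= 1.
Proof. split. apply sumL_nonneg; intros; apply in_real_nonneg with L; auto. apply (in_real_sum_le1 L x); auto. apply kcell_verts_spec. Qed.
Lemma out_mass_bounds : 0 <= out_mass s x <= 1.
Proof. unfold out_mass; pose proof in_mass_bounds; lra. Qed.
Lemma coord_le_out_mass v : ~ s v -> x v <= out_mass s x.
Proof. intros Hv. assert (Hnd : NoDup (v :: verts s)).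
 { constructor. intros H; apply Hv, kcell_verts_spec; auto. apply kcell_verts_spec. }
 pose proof (in_real_sum_le1 L x _ Hx Hnd). rewrite sumL_cons in H. unfold out_mass, in_mass. lra. Qed.
Lemma min_coord_le v : s v -> min_coord s x <= x v.
Proof. intros Hv. apply minL_le, kcell_verts_spec; auto. Qed.
Lemma min_coord_nonneg : 0 <= min_coord s x.
Proof. apply minL_ge. apply kcell_verts_ne. intros; apply in_real_nonneg with L; auto. Qed.
Lemma min_coord_le_in_mass : min_coord s x <= in_mass s x.
Proof. destruct (minL_in x (verts s) kcell_verts_ne) as [v [Hv Heq]]. unfold min_coord. rewrite Heq.
 apply sumL_ge_term; auto. intros; apply in_real_nonneg with L; auto. Qed.
Lemma out_mass_lt1 : 0 < min_coord s x -> out_mass s x < 1.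
Proof. intros H. pose proof min_coord_le_in_mass. unfold out_mass; lra. Qed.
Lemma min_coord_pos_supp v : 0 < min_coord s x -> s v -> x v <> 0.
Proof. intros H Hv. pose proof (min_coord_le v Hv). lra. Qed.

Lemma out_mass0_supp : out_mass s x = 0 -> subset (supp x) s.
Proof. intros H v Hv. apply NNPP; intro Hn. pose proof (coord_le_out_mass v Hn). pose proof (in_real_nonneg L x v Hx).
 apply Hv; lra. Qed.

End CellCoords.

Lemma card_le_NoDup (t : V -> Prop) (l : list V) n : NoDup l -> (forall v, In v l -> t v) -> card_le t n -> (length l <= n)%nat.
Proof. intros Hn Hi [l' [Hl' Hc]]. assert (incl l l') by (intros v Hv; apply Hc, Hi; auto).
 pose proof (NoDup_incl_length Hn H). lia. Qed.

Lemma off_skel_full s x : kcell s -> off_skel k x -> subset (supp x) s -> forall v, s v -> x v <> 0.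
Proof. intros Hs [Hx Hw] Hsub v0 Hv0 Hz. destruct (kcell_verts s Hs) as [Hn [Hi Hlen]].
 destruct Hw as [Hw|Hw]; apply Hw.
 - apply subcomplex_face with s; auto. apply Hs. apply in_real_supp_ne with L; auto.
 - exists (remove vdec v0 (verts s)). split.
   + pose proof (remove_length_lt vdec (verts s) v0 (proj1 (Hi v0) Hv0)). lia.
   + intros v Hv. apply in_in_remove. intros ->; apply Hv; auto. apply Hi, Hsub; auto. Qed.

Lemma near_cell_closed_min_pos s x : off_skel k x -> near_cell_closed s x -> 0 < min_coord s x.
Proof. intros Hw [Hs Hc]. assert (Hx : in_real L x) by apply Hw.
 pose proof (min_coord_nonneg s Hs x Hx). destruct (Rle_lt_or_eq_dec _ _ H) as [Hlt|Heq]; auto. exfalso.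
 pose proof (out_mass_bounds s Hs x Hx). assert (Hsv : out_mass s x = 0) by lra.
 pose proof (off_skel_full s x Hs Hw (out_mass0_supp s Hs x Hx Hsv)) as Hf.
 destruct (minL_in x (verts s) (kcell_verts_ne s Hs)) as [v [Hv Hmv]]. unfold min_coord in Heq. rewrite Hmv in Heq.
 apply (Hf v); auto. apply (kcell_verts_spec s Hs); auto. Qed.

Lemma near_cell_min_pos s x : in_real L x -> near_cell s x -> 0 < min_coord s x.
Proof. intros Hx [Hs Hc]. pose proof (out_mass_bounds s Hs x Hx). lra. Qed.

Lemma pred_ext (s t : V -> Prop) : (forall v, s v <-> t v) -> s = t.
Proof. intros H. apply functional_extensionality; intro v. apply propositional_extensionality; auto. Qed.

Lemma kcell_incl_eq s t : kcell s -> kcell t -> (forall v, s v -> t v) -> s = t.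
Proof. intros Hs Ht H. destruct (kcell_verts s Hs) as [Hn1 [Hi1 Hl1]]. destruct (kcell_verts t Ht) as [Hn2 [Hi2 Hl2]].
 assert (incl (verts s) (verts t)) by (intros v Hv; apply Hi2, H, Hi1; auto).
 assert (H2 : incl (verts t) (verts s)) by (apply NoDup_length_incl; auto; lia).
 apply pred_ext. intros v; split; auto. intros Hv. apply Hi1, H2, Hi2; auto. Qed.

(* Distinct cells with k+1 vertices each miss a vertex of the other; comparing those two
   coordinates at x0 and at q contradicts the margins. *)
Lemma near_cell_near_unique s s' x0 q e : kcell s -> kcell s' -> in_real L x0 -> in_real L q -> out_mass s x0 <= min_coord s x0 / 2 ->
  0 < min_coord s x0 -> e <= min_coord s x0 / 4 -> close x0 q e -> out_mass s' q < min_coord s' q / 2 -> s' = s.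
Proof. intros Hs Hs' Hx0 Hq Hc Hm He Hcl Hc'.
 destruct (classic (forall v, s v -> s' v)) as [H1|H1]. symmetry; apply kcell_incl_eq; auto.
 destruct (classic (forall v, s' v -> s v)) as [H2|H2]. apply kcell_incl_eq; auto.
 exfalso. apply not_all_ex_not in H1. destruct H1 as [v Hv]. apply imply_to_and in Hv. destruct Hv as [Hv1 Hv2].
 apply not_all_ex_not in H2. destruct H2 as [w Hw]. apply imply_to_and in Hw. destruct Hw as [Hw1 Hw2].
 pose proof (coord_le_out_mass s Hs x0 Hx0 w Hw2). pose proof (min_coord_le s Hs x0 v Hv1).
 pose proof (coord_le_out_mass s' Hs' q Hq v Hv2). pose proof (min_coord_le s' Hs' q w Hw1).
 pose proof (Hcl v) as Av. pose proof (Hcl w) as Aw. apply Rabs_lt_inv in Av. apply Rabs_lt_inv in Aw.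
 lra. Qed.

Lemma near_cell_unique s s' x : in_real L x -> near_cell s x -> near_cell s' x -> s' = s.
Proof. intros Hx [Hs Hc] [Hs' Hc']. pose proof (near_cell_min_pos s x Hx (conj Hs Hc)).
 apply (near_cell_near_unique s s' x x (min_coord s x / 4)); auto. lra. lra. apply close_refl. lra. Qed.

Lemma push_off_near s x u : in_real L x -> near_cell s x -> push_off x u = push s x u.
Proof. intros Hx Hr. unfold push_off. destruct excluded_middle_informative as [h|h].
 - destruct (constructive_indefinite_description _ h) as [s' Hs']. simpl. rewrite (near_cell_unique s s' x); auto.
 - exfalso; apply h; exists s; auto. Qed.
Lemma push_off_far x u : ~ (exists s, near_cell s x) -> push_off x u = x.
Proof. intros H. unfold push_off. destruct excluded_middle_informative; tauto. Qed.

Lemma not_card_le_k s z : kcell s -> (forall v, s v -> z v <> 0) -> ~ card_le (supp z) k.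
Proof. intros Hs Hz Hc. destruct (kcell_verts s Hs) as [Hn [Hi Hl]].
 pose proof (card_le_NoDup (supp z) (verts s) k Hn (fun v Hv => Hz v (proj2 (Hi v) Hv)) Hc). lia. Qed.
Lemma not_card_le_Sk s z v0 : kcell s -> (forall v, s v -> z v <> 0) -> ~ s v0 -> z v0 <> 0 -> ~ card_le (supp z) (S k).
Proof. intros Hs Hz Hv0 Hz0 Hc. destruct (kcell_verts s Hs) as [Hn [Hi Hl]].
 assert (Hn' : NoDup (v0 :: verts s)). { constructor; auto. intros H; apply Hv0, Hi; auto. }
 assert (Hin : forall v, In v (v0 :: verts s) -> supp z v). { intros v [<-|Hv]; auto. apply Hz, Hi; auto. }
 pose proof (card_le_NoDup (supp z) _ (S k) Hn' Hin Hc). simpl in H. lia. Qed.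

Lemma off_skel_k_of s z : kcell s -> in_real L z -> (forall v, s v -> z v <> 0) -> off_skel k z.
Proof. intros Hs Hz H. split; auto. right. apply not_card_le_k with s; auto. Qed.
Lemma off_skel_Sk_of s z v0 : kcell s -> in_real L z -> (forall v, s v -> z v <> 0) -> ~ s v0 -> z v0 <> 0 -> off_skel (S k) z.
Proof. intros Hs Hz H Hv0 Hz0. split; auto. right. apply not_card_le_Sk with s v0; auto. Qed.

Section PushFacts.
Variable s : V -> Prop.
Hypothesis Hs : kcell s.
Variable x : V -> R.
Hypothesis Hx : in_real L x.
Hypothesis Hmn : 0 < min_coord s x.

Lemma gap_bounds : 0 <= gap s x <= min_coord s x / 2.
Proof. unfold gap. pose proof (out_mass_bounds s Hs x Hx). unfold Rmax; destruct Rle_dec; lra. Qed.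
Lemma out_support_list : exists lo, NoDup lo /\ (forall v, In v lo <-> x v <> 0 /\ ~ s v) /\ sumL x lo = out_mass s x.
Proof. destruct (in_real_list L x Hx) as [lx [Hnx [Hcx _]]].
 destruct (NoDup_filter_ex (fun v => x v <> 0 /\ ~ s v) lx) as [lo [Hno Hio]].
 exists lo. split; auto. split. intros v. rewrite Hio. split; [tauto|]. intros [H1 H2]; split; auto.
 destruct (kcell_verts_spec s Hs) as [Hn Hi].
 assert (Hsum : sumL x (verts s ++ lo) = 1).
 { apply (in_real_sum L x); auto. apply NoDup_app; auto. intros v H1 H2. apply Hio in H2. apply H2, Hi; auto.
   intros v Hv. apply in_or_app. destruct (classic (s v)). left; apply Hi; auto. right; apply Hio; auto. }
 rewrite sumL_app in Hsum. unfold out_mass, in_mass. lra. Qed.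

Lemma out_mass_pos_supp : 0 < out_mass s x -> exists v, ~ s v /\ x v <> 0.
Proof. intros H. destruct out_support_list as [lo [Hn [Hi Hsum]]]. apply NNPP; intro Hn'.
 assert (sumL x lo = 0). { apply sumL_zero. intros v Hv. apply Hi in Hv. exfalso; apply Hn'; exists v; tauto. } lra. Qed.

Lemma link_dir_real : 0 < out_mass s x -> in_real (link L s) (link_dir s x) /\ (forall v, link_dir s x v <> 0 -> x v <> 0 /\ ~ s v).
Proof. intros Hsv. unfold link_dir. destruct Rlt_dec as [_|]; [|lra].
 set (y := fun v => if cell_dec s v then 0 else x v / out_mass s x).
 assert (Hsupp : forall v, y v <> 0 -> x v <> 0 /\ ~ s v).
 { intros v Hv. unfold y in Hv. destruct (cell_dec s v); [lra|]. split; auto. intros Hz; apply Hv; rewrite Hz; unfold Rdiv; ring. }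
 split; auto. destruct out_support_list as [lo [Hn [Hi Hsum]]].
 split; [|split].
 - intros v. unfold y. destruct (cell_dec s v); [lra|]. unfold Rdiv; apply Rmult_le_pos; [apply in_real_nonneg with L; auto | left; apply Rinv_0_lt_compat; lra].
 - split; [|split].
   + apply (complex_face L HL) with (supp x); auto. apply (in_real_simplex L x Hx).
     destruct (out_mass_pos_supp Hsv) as [v [Hv1 Hv2]]. exists v. unfold supp, y. destruct (cell_dec s v); [contradiction|].
     intros Hz. apply Hv2. apply (f_equal (fun t => t * out_mass s x)) in Hz. field_simplify in Hz; lra.
     intros v Hv. apply Hsupp; auto.
   + intros v Hv. apply Hsupp; auto.
   + exists (supp x). split. apply (in_real_simplex L x Hx). split. intros v Hv; apply Hsupp; auto.
     intros v Hv. apply min_coord_pos_supp with s; auto.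
 - exists lo. split; auto. split. intros v Hv. apply Hi. apply Hsupp; auto.
   change (sumL y lo = 1). rewrite (sumL_ext y (fun v => / out_mass s x * x v) lo). rewrite sumL_scal, Hsum. field; lra.
   intros v Hv. unfold y. destruct (cell_dec s v). exfalso; apply Hi in Hv; tauto. unfold Rdiv; ring. Qed.

Variable u : R.
Hypothesis Hu : 0 <= u <= 1.

Lemma pushed_out_mass_bounds : out_mass s x <= pushed_out_mass s x u < 1.
Proof. unfold pushed_out_mass. pose proof gap_bounds. pose proof (out_mass_bounds s Hs x Hx). pose proof (out_mass_lt1 s Hs x Hx Hmn).
 pose proof (min_coord_le_in_mass s Hs x Hx). pose proof (in_mass_bounds s Hs x Hx).
 assert (0 <= u * gap s x <= gap s x) by (split; [apply Rmult_le_pos|]; nra).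
 split. lra. unfold gap in *. unfold Rmax in *. destruct Rle_dec; unfold out_mass in *; lra. Qed.
Lemma shrink_pos : 0 < shrink s x u.
Proof. unfold shrink. pose proof pushed_out_mass_bounds. pose proof (out_mass_lt1 s Hs x Hx Hmn). apply Rdiv_lt_0_compat; lra. Qed.

Lemma push_weights : join_weights (verts s) (shrunk s x u) (pushed_out_mass s x u).
Proof. pose proof pushed_out_mass_bounds. pose proof (out_mass_bounds s Hs x Hx). pose proof shrink_pos.
 split; [|split]. intros v _. unfold shrunk. apply Rmult_le_pos; [lra|]. apply in_real_nonneg with L; auto.
 lra. unfold shrunk. rewrite sumL_scal. fold (in_mass s x). unfold shrink.
 pose proof (out_mass_lt1 s Hs x Hx Hmn). unfold out_mass in *. field. lra. Qed.

Lemma contr_dir_real : in_real (link L s) (contr_dir s x u).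
Proof. destruct (link_contr_spec s (proj1 Hs)) as [Hy0 [Hcr _]]. unfold contr_dir.
 destruct (Rlt_dec 0 (out_mass s x)) as [Hp|Hp].
 - apply Hcr. apply link_dir_real; auto.
 - unfold link_dir. destruct Rlt_dec; [contradiction|]. apply Hcr; auto. Qed.

Lemma push_real : in_real L (push s x u) /\ subset (supp (push s x u)) (fun v => s v \/ supp (contr_dir s x u) v).
Proof. apply (join_real L HL s (verts s) (kcell_verts_spec s Hs)). apply push_weights. apply contr_dir_real. Qed.

Lemma push_on_cell v : s v -> push s x u v <> 0.
Proof. intros Hv. unfold push, join. destruct (cell_dec s v); [|contradiction]. unfold shrunk.
 pose proof shrink_pos. pose proof (min_coord_pos_supp s Hs x v Hmn Hv). pose proof (in_real_nonneg L x v Hx).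
 intros Hz. apply Rmult_integral in Hz. destruct Hz; lra. Qed.

Lemma push_leaves_cell : 0 < pushed_out_mass s x u -> exists v, ~ s v /\ push s x u v <> 0.
Proof. intros Hsu. destruct (in_real_supp_ne (link L s) _ contr_dir_real) as [v Hv].
 destruct (link_in_real L s _ contr_dir_real) as [_ [Hd _]]. exists v. split. apply Hd; auto.
 unfold push, join. destruct (cell_dec s v). exfalso; apply (Hd v); auto.
 intros Hz. apply Rmult_integral in Hz. destruct Hz; lra. Qed.

Lemma push_id : u = 0 \/ gap s x = 0 -> push s x u = x.
Proof. intros Hug. assert (Hsu : pushed_out_mass s x u = out_mass s x) by (unfold pushed_out_mass; destruct Hug as [->| ->]; lra).
 apply functional_extensionality; intro v. unfold push, join, shrunk, shrink. rewrite Hsu.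
 pose proof (out_mass_lt1 s Hs x Hx Hmn).
 destruct (cell_dec s v) as [Hv|Hv]. field; lra.
 unfold contr_dir. destruct (Rlt_dec 0 (out_mass s x)) as [Hp|Hp].
 - assert (Hth : contr_time s x u = 0).
   { unfold contr_time. destruct Rlt_dec; [|contradiction]. destruct Hug as [->| ->]; unfold Rmin; destruct Rle_dec; try lra;
     unfold Rdiv in *; rewrite ?Rmult_0_l, ?Rmult_0_r in *; lra. }
   rewrite Hth. destruct (link_contr_spec s (proj1 Hs)) as [_ [_ [Hc0 _]]]. rewrite Hc0 by (apply link_dir_real; auto).
   unfold link_dir. destruct Rlt_dec; [|contradiction]. destruct (cell_dec s v); [contradiction|]. field; lra.
 - pose proof (out_mass_bounds s Hs x Hx). assert (out_mass s x = 0) by lra. rewrite H1, Rmult_0_l.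
   pose proof (coord_le_out_mass s Hs x Hx v Hv). pose proof (in_real_nonneg L x v Hx). lra. Qed.
End PushFacts.

Lemma off_skel_mono x : off_skel (S k) x -> off_skel k x.
Proof. intros [Hx [H|H]]; split; auto. right. intros [l [Hl Hi]]. apply H. exists l; split; auto. Qed.

Lemma near_cell_gap_pos s x : in_real L x -> near_cell s x -> 0 < gap s x.
Proof. intros Hx [Hs Hc]. unfold gap, Rmax. destruct Rle_dec; lra. Qed.

Lemma push_off_0 x : in_real L x -> push_off x 0 = x.
Proof. intros Hx. destruct (classic (exists s, near_cell s x)) as [[s Hs]|Hn].
 - rewrite (push_off_near s x 0 Hx Hs). apply push_id; auto. apply Hs. apply near_cell_min_pos; auto. lra.
 - apply push_off_far; auto. Qed.

Lemma push_off_k x u : off_skel k x -> 0 <= u <= 1 -> off_skel k (push_off x u).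
Proof. intros Hw Hu. assert (Hx : in_real L x) by apply Hw.
 destruct (classic (exists s, near_cell s x)) as [[s Hs]|Hn].
 - rewrite (push_off_near s x u Hx Hs). assert (Hm0 := near_cell_min_pos s x Hx Hs). destruct Hs as [Hs Hc].
   apply off_skel_k_of with s; auto. apply push_real; auto. intros v Hv. apply push_on_cell; auto.
 - rewrite push_off_far; auto. Qed.

Lemma not_off_skel_Sk_cell s x : kcell s -> in_real L x -> subset (supp x) s -> (forall v, s v -> x v <> 0) -> ~ off_skel (S k) x.
Proof. intros Hs Hx Hsub Hf [_ Hw]. assert (Heq : supp x = s) by (apply pred_ext; intros v; split; auto; apply Hf).
 destruct Hw as [Hw|Hw]; apply Hw; rewrite Heq. apply Hs.
 destruct (kcell_verts s Hs) as [_ [Hi Hl]]. exists (verts s). split. lia. intros v Hv; apply Hi; auto. Qed.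

Lemma push_off_Sk x u : off_skel (S k) x -> 0 <= u <= 1 -> off_skel (S k) (push_off x u).
Proof. intros Hw Hu. assert (Hx : in_real L x) by apply Hw.
 destruct (classic (exists s, near_cell s x)) as [[s Hs]|Hn].
 - rewrite (push_off_near s x u Hx Hs). assert (Hm0 := near_cell_min_pos s x Hx Hs). destruct Hs as [Hs Hc].
   assert (Hsv : 0 < out_mass s x).
   { pose proof (out_mass_bounds s Hs x Hx) as Hb. destruct (Rle_lt_or_eq_dec 0 (out_mass s x) (proj1 Hb)) as [H0|H0]; [auto|].
     exfalso. assert (Hsub := out_mass0_supp s Hs x Hx (eq_sym H0)).
     apply (not_off_skel_Sk_cell s x Hs Hx Hsub); auto. apply off_skel_full; auto. apply off_skel_mono; auto. }
   pose proof (pushed_out_mass_bounds s Hs x Hx Hm0 u Hu).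
   destruct (push_leaves_cell s Hs x Hx Hm0 u) as [v0 [Hv0 Hz0]]. lra.
   apply off_skel_Sk_of with s v0; auto. apply push_real; auto. intros v Hv. apply push_on_cell; auto.
 - rewrite push_off_far; auto. Qed.

Lemma push_off_1 x : off_skel k x -> off_skel (S k) (push_off x 1).
Proof. intros Hw. assert (Hx : in_real L x) by apply Hw.
 destruct (classic (exists s, near_cell s x)) as [[s Hs]|Hn].
 - rewrite (push_off_near s x 1 Hx Hs). assert (Hm0 := near_cell_min_pos s x Hx Hs). assert (Hg := near_cell_gap_pos s x Hx Hs). destruct Hs as [Hs Hc].
   assert (Hu : 0 <= 1 <= 1) by lra.
   pose proof (out_mass_bounds s Hs x Hx).
   destruct (push_leaves_cell s Hs x Hx Hm0 1) as [v0 [Hv0 Hz0]]. unfold pushed_out_mass; lra.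
   apply off_skel_Sk_of with s v0; auto. apply push_real; auto. intros v Hv. apply push_on_cell; auto.
 - rewrite push_off_far; auto. apply NNPP; intro Hn'. apply Hn.
   destruct Hw as [_ Hw]. unfold off_skel in Hn'. apply not_and_or in Hn'. destruct Hn' as [Hn'|Hn']; [contradiction|].
   apply not_or_and in Hn'. destruct Hn' as [HL0x Hc]. apply NNPP in HL0x. apply NNPP in Hc.
   assert (Hck : ~ card_le (supp x) k) by (destruct Hw; tauto).
   destruct Hc as [l [Hl Hcov]]. destruct (NoDup_filter_ex (supp x) l) as [l' [Hn' Hi']].
   assert (Hlen' : (length l' <= S k)%nat).
   { assert (incl l' l) by (intros v Hv; apply Hi'; auto). pose proof (NoDup_incl_length Hn' H). lia. }
   assert (Hlen'' : length l' = S k).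
   { destruct (Nat.eq_dec (length l') (S k)); auto. exfalso. apply Hck. exists l'. split. lia.
     intros v Hv. apply Hi'. split; auto. }
   assert (HSP : kcell (supp x)). { split; auto. exists l'. split; auto. split; auto. intros v. rewrite Hi'. split; [|tauto]. intros Hv; split; auto. }
   exists (supp x). split; auto.
   destruct (kcell_verts _ HSP) as [Hn2 [Hi2 _]].
   assert (Hm1 : in_mass (supp x) x = 1) by (apply (in_real_sum L x); auto; intros v Hv; apply Hi2; auto).
   assert (Hmp : 0 < min_coord (supp x) x).
   { destruct (minL_in x (verts (supp x)) (kcell_verts_ne _ HSP)) as [v [Hv Heq]]. unfold min_coord; rewrite Heq.
     assert (x v <> 0) by (apply Hi2; auto). pose proof (in_real_nonneg L x v Hx). lra. }
   unfold out_mass. lra.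
Qed.

Fixpoint sublists (l : list V) : list (list V) :=
  match l with nil => nil :: nil | a :: l' => sublists l' ++ map (cons a) (sublists l') end.

Lemma sublists_spec (lr : list V) : NoDup lr -> forall l, incl l lr ->
  exists l', In l' (sublists lr) /\ NoDup l' /\ forall v, In v l <-> In v l'.
Proof. induction lr as [|a lr IH]; intros Hn l Hl.
 - exists nil. split; [left; auto|]. split; [constructor|]. intros v; split; [intros Hv; apply (Hl v Hv)|intros []].
 - inversion Hn; subst. set (l1 := remove (vdec) a l).
   assert (Hl1 : incl l1 lr). { intros v Hv. apply in_remove in Hv. destruct Hv as [Hv Hne]. destruct (Hl v Hv); [congruence|auto]. }
   destruct (IH H2 l1 Hl1) as [l1' [Hin [Hn1 Hi1]]].
   destruct (classic (In a l)) as [Ha|Ha].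
   + exists (a :: l1'). split. simpl. apply in_or_app; right. apply in_map; auto.
     split. constructor; auto. intros Hin'. apply Hi1 in Hin'. apply in_remove in Hin'. tauto.
     intros v. split. intros Hv. destruct (vdec v a) as [->|Hne]; [left; auto|right; apply Hi1, in_in_remove; auto].
     intros [<-|Hv]; auto. apply Hi1 in Hv. apply in_remove in Hv; tauto.
   + exists l1'. split. simpl. apply in_or_app; left; auto. split; auto.
     intros v. rewrite <- Hi1. split. intros Hv. apply in_in_remove; auto. intros ->; contradiction.
     intros Hv; apply in_remove in Hv; tauto. Qed.

Lemma min_pos_finite (LL : list (list V)) (h : list V -> R) : (forall l, In l LL -> 0 < h l) ->
  exists d, 0 < d /\ forall l, In l LL -> d <= h l.
Proof. induction LL as [|a LL IH]; intros H. exists 1; split; [lra|]; intros _ [].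
 destruct IH as [d [Hd Hf]]. intros; apply H; right; auto.
 exists (Rmin d (h a)). split. apply Rmin_glb_lt; auto. apply H; left; auto.
 intros l [<-|Hl]. apply Rmin_r. eapply Rle_trans; [apply Rmin_l|]. auto. Qed.

Definition list_gap (x : V -> R) (l : list V) := 1 - sumL x l - minL x l / 2.

Lemma gap_uniform x0 rho : in_real L x0 -> L rho ->
  (forall s, kcell s -> subset s rho -> out_mass s x0 > min_coord s x0 / 2) ->
  exists d, 0 < d /\ forall s, kcell s -> subset s rho -> d <= out_mass s x0 - min_coord s x0 / 2.
Proof.
  intros Hx0 Hr Hgap. destruct (simplex_list L HL rho Hr) as [lr [Hnr Hir]].
  set (same := fun (l1 l2 : list V) => forall v, In v l1 <-> In v l2).
  set (h := fun l' => if excluded_middle_informative (NoDup l' /\ exists s, kcell s /\ subset s rho /\ same (verts s) l') then list_gap x0 l' else 1).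
  assert (HG : forall s l', kcell s -> NoDup l' -> same (verts s) l' -> list_gap x0 l' = out_mass s x0 - min_coord s x0 / 2).
  { intros s l' Hs Hn' Hsm. unfold list_gap, out_mass, in_mass, min_coord. destruct (kcell_verts s Hs) as [Hn [_ _]].
    rewrite (sumL_same x0 l' (verts s)); auto. rewrite (minL_same x0 l' (verts s)). ring.
    intros v; symmetry; apply Hsm. intros v; symmetry; apply Hsm. }
  destruct (min_pos_finite (sublists lr) h) as [d [Hd Hf]].
  { intros l' Hl'. unfold h. destruct excluded_middle_informative as [[Hnd [s [Hs [Hsr Hsm]]]]|]; [|lra].
    rewrite (HG s l'); auto. specialize (Hgap s Hs Hsr). lra. }
  exists d. split; auto. intros s Hs Hsr.
  destruct (kcell_verts s Hs) as [Hn [Hi _]].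
  destruct (sublists_spec lr Hnr (verts s)) as [l' [Hin [Hn' Hsm]]].
  { intros v Hv. apply Hir, Hsr, Hi; auto. }
  specialize (Hf l' Hin). unfold h in Hf. destruct excluded_middle_informative as [_|Hno].
  rewrite (HG s l') in Hf; auto. exfalso; apply Hno; split; auto; exists s; auto.
Qed.

Lemma contr_time_in s x u : 0 <= u <= 1 -> 0 <= gap s x -> 0 <= contr_time s x u <= 1.
Proof. intros Hu Hg. unfold contr_time. destruct Rlt_dec; [|lra]. unfold Rmin; destruct Rle_dec; [lra|].
 split; [|lra]. unfold Rdiv. apply Rmult_le_pos. apply Rmult_le_pos; lra. left; apply Rinv_0_lt_compat; auto. Qed.

Section RcontCell.
Variable D : (V -> R) -> Prop.
Variable x0 : V -> R.
Variable u0 : R.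
Variable s : V -> Prop.

Lemma rcont_in_mass : rcont D x0 u0 (fun q _ => in_mass s q).
Proof. exact (rcont_sumL D x0 u0 (fun v q u => q v) (verts s) (fun v _ => rcont_coord D x0 u0 v)). Qed.
Lemma rcont_out_mass : rcont D x0 u0 (fun q _ => out_mass s q).
Proof. exact (rcont_minus D x0 u0 _ _ (rcont_const D x0 u0 1) rcont_in_mass). Qed.
Lemma rcont_min_coord : rcont D x0 u0 (fun q _ => min_coord s q).
Proof. exact (rcont_minL D x0 u0 (fun v q u => q v) (verts s) (fun v _ => rcont_coord D x0 u0 v)). Qed.
Lemma rcont_gap : rcont D x0 u0 (fun q _ => gap s q).
Proof. unfold gap. apply rcont_max. apply rcont_const. apply rcont_minus; [|apply rcont_out_mass].
 exact (rcont_div D x0 u0 _ _ rcont_min_coord (rcont_const D x0 u0 2) ltac:(cbv beta; lra)). Qed.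
Lemma rcont_pushed_out_mass : rcont D x0 u0 (fun q u => pushed_out_mass s q u).
Proof. unfold pushed_out_mass. apply rcont_plus. apply rcont_out_mass.
 exact (rcont_div D x0 u0 _ _ (rcont_mult D x0 u0 _ _ (rcont_param D x0 u0) rcont_gap) (rcont_const D x0 u0 2) ltac:(cbv beta; lra)). Qed.
Lemma rcont_shrink : out_mass s x0 <> 1 -> rcont D x0 u0 (fun q u => shrink s q u).
Proof. intros H. unfold shrink. apply rcont_div. apply rcont_minus. apply rcont_const. apply rcont_pushed_out_mass.
 apply rcont_minus. apply rcont_const. apply rcont_out_mass. simpl. lra. Qed.
Lemma rcont_shrunk v : out_mass s x0 <> 1 -> rcont D x0 u0 (fun q u => shrunk s q u v).
Proof. intros H. unfold shrunk. apply rcont_mult. apply rcont_shrink; auto. apply rcont_coord. Qed.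
Lemma rcont_contr_time : out_mass s x0 <> 0 -> rcont D x0 u0 (fun q u => Rmin 1 (u * gap s q / out_mass s q)).
Proof. intros H. apply rcont_min. apply rcont_const. apply rcont_div. apply rcont_mult. apply rcont_param. apply rcont_gap. apply rcont_out_mass. auto. Qed.
Lemma rcont_link_dir v : out_mass s x0 <> 0 -> rcont D x0 u0 (fun q u => if cell_dec s v then 0 else q v / out_mass s q).
Proof. intros H. destruct (cell_dec s v). apply rcont_const. apply rcont_div. apply rcont_coord. apply rcont_out_mass. auto. Qed.
End RcontCell.

Definition on_simplex (rho : V -> Prop) (q : V -> R) := in_real L q /\ subset (supp q) rho.

Lemma link_face s rho x0 : kcell s -> L rho -> subset (supp x0) rho -> in_real L x0 -> 0 < min_coord s x0 ->
  (exists v, rho v /\ ~ s v) -> link L s (fun v => rho v /\ ~ s v).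
Proof. intros Hs Hr Hsub Hx Hm Hne. split; [|split].
 - apply (complex_face L HL) with rho; auto. intros v [Hv _]; auto.
 - intros v [_ Hv]; auto.
 - exists rho. split; auto. split. intros v [Hv _]; auto. intros v Hv. apply Hsub. apply (min_coord_pos_supp s Hs x0 v Hm Hv). Qed.

Lemma weights_near_of s a0 b0 eta a b : (forall v, In v (verts s) -> Rabs (a v - a0 v) < eta) -> Rabs (b - b0) < eta -> weights_near (verts s) a0 b0 eta a b.
Proof. intros H1 H2. split. intros v Hv; left; auto. left; auto. Qed.

Ltac minle := match goal with
 | |- ?a <= ?a => apply Rle_refl
 | |- Rmin ?a ?b <= ?c => (apply Rle_trans with a; [apply Rmin_l | minle]) || (apply Rle_trans with b; [apply Rmin_r | minle])
 end.
Ltac minpos := repeat apply Rmin_glb_lt; auto.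

Lemma link_dir_pos s q v : 0 < out_mass s q -> link_dir s q v = (if cell_dec s v then 0 else q v / out_mass s q).
Proof. intros H. unfold link_dir. destruct Rlt_dec; [auto|lra]. Qed.
Lemma contr_time_pos s q u : 0 < out_mass s q -> contr_time s q u = Rmin 1 (u * gap s q / out_mass s q).
Proof. intros H. unfold contr_time. destruct Rlt_dec; [auto|lra]. Qed.

Lemma push_weights_near (D : (V -> R) -> Prop) s x0 u0 eta : kcell s -> in_real L x0 -> 0 < min_coord s x0 -> 0 < eta ->
  exists e, 0 < e /\ forall q u, D q -> close x0 q e -> Rabs (u - u0) < e ->
    weights_near (verts s) (shrunk s x0 u0) (pushed_out_mass s x0 u0) eta (shrunk s q u) (pushed_out_mass s q u).
Proof.
  intros Hs Hx0 Hm0 Heta.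
  assert (Hsv1 : out_mass s x0 <> 1) by (pose proof (out_mass_lt1 s Hs x0 Hx0 Hm0); lra).
  destruct (rcont_uniform D x0 u0 (fun v q u => shrunk s q u v) (verts s)
    (fun v _ => rcont_shrunk D x0 u0 s v Hsv1) eta Heta) as [e1 [He1 H1]].
  destruct (rcont_pushed_out_mass D x0 u0 s eta Heta) as [e2 [He2 H2]].
  exists (Rmin e1 e2). split; [minpos|]. intros q u Hq Hc Hu.
  apply weights_near_of.
  - intros v Hv. apply (H1 q u Hq); auto.
    + eapply close_mono; [|exact Hc]. minle.
    + eapply Rlt_le_trans; [exact Hu|]. minle.
  - apply (H2 q u Hq).
    + eapply close_mono; [|exact Hc]. minle.
    + eapply Rlt_le_trans; [exact Hu|]. minle.
Qed.

Lemma contr_dir_base s q u : kcell s -> in_real L q -> 0 < min_coord s q -> 0 <= u <= 1 ->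
  (out_mass s q = 0 \/ (0 < out_mass s q /\ out_mass s q <= u * gap s q)) -> contr_dir s q u = link_base s.
Proof. intros Hs Hq Hm Hu Hc. destruct (link_contr_spec s (proj1 Hs)) as [Hy0r [Hcr [Hc0 [Hc1 HCC]]]].
 unfold contr_dir. destruct Hc as [H0|[Hp Hle]].
 - unfold contr_time, link_dir. destruct Rlt_dec; [lra|]. apply Hc1; auto.
 - rewrite (contr_time_pos s q u Hp). replace (Rmin 1 (u * gap s q / out_mass s q)) with 1.
   apply Hc1. apply (link_dir_real s Hs q Hq Hm Hp).
   unfold Rmin. destruct Rle_dec as [|Hn]; auto. exfalso. apply Hn.
   apply Rmult_le_reg_r with (out_mass s q); auto. unfold Rdiv. rewrite Rmult_assoc, Rinv_l by lra. lra. Qed.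

(* For positive time and tiny outer mass the contraction has already reached the base point. *)
Lemma push_cont_on_cell s x0 u0 rho Om :
  kcell s -> in_real L x0 -> 0 < min_coord s x0 -> L rho -> subset (supp x0) rho -> 0 < u0 <= 1 -> out_mass s x0 = 0 ->
  rel_open L Om -> Om (push s x0 u0) ->
  exists e, 0 < e /\ forall q u, on_simplex rho q -> close x0 q e -> 0 <= u <= 1 -> Rabs (u - u0) < e -> Om (push s q u).
Proof.
  intros Hs Hx0 Hm0 Hr Hsub Hu0 Hsv0 HOm HOm0.
  assert (Hu0' : 0 <= u0 <= 1) by lra.
  destruct (link_contr_spec s (proj1 Hs)) as [Hy0r _].
  assert (Hw0 : contr_dir s x0 u0 = link_base s) by (apply contr_dir_base; auto).
  unfold push in HOm0. rewrite Hw0 in HOm0.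
  destruct (join_cont L HL s (verts s) (kcell_verts_spec s Hs) (kcell_simplex s Hs) Om _ _ _ HOm
    (push_weights s Hs x0 Hx0 Hm0 u0 Hu0') Hy0r HOm0) as [O [HO [Ow0 [eta [Heta Hf]]]]].
  set (M := min_coord s x0). set (c := Rmin (M / 8) (u0 * M / 32)).
  assert (Hc : 0 < c).
  { unfold c, M; apply Rmin_glb_lt; [lra|]; apply Rdiv_lt_0_compat; [apply Rmult_lt_0_compat|]; lra. }
  set (D := on_simplex rho).
  destruct (rcont_lt_near D x0 u0 _ c (rcont_out_mass D x0 u0 s) ltac:(cbv beta; lra)) as [e1 [He1 H1]].
  destruct (rcont_gt_near D x0 u0 _ (M / 2) (rcont_min_coord D x0 u0 s) ltac:(cbv beta; unfold M; lra))
    as [e2 [He2 H2]].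
  destruct (push_weights_near D s x0 u0 eta Hs Hx0 Hm0 Heta) as [e3 [He3 H3]].
  set (e := Rmin (Rmin e1 e2) (Rmin (u0 / 2) e3)).
  exists e. split; [unfold e; minpos; lra|].
  intros q u Hq Hcl Hu Hdu.
  assert (C : forall ei, e <= ei -> close x0 q ei /\ Rabs (u - u0) < ei).
  { intros ei Hei. split. eapply close_mono; [|exact Hcl]; auto. lra. }
  destruct (C e1 ltac:(unfold e; minle)) as [C1 U1]. destruct (C e2 ltac:(unfold e; minle)) as [C2 U2].
  destruct (C (u0/2) ltac:(unfold e; minle)) as [_ U].
  destruct (C e3 ltac:(unfold e; minle)) as [C3 U3].
  assert (Hsvq : out_mass s q < c) by (apply (H1 q u); auto).
  assert (Hmq : M / 2 < min_coord s q) by (apply (H2 q u); auto).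
  assert (Hwq : contr_dir s q u = link_base s).
  { apply contr_dir_base; auto; [apply Hq | unfold M in *; lra|].
    destruct (Rle_lt_or_eq_dec _ _ (proj1 (out_mass_bounds s Hs q (proj1 Hq)))) as [Hp|Hz]; [right|left; auto].
    split; auto. assert (Hgq : min_coord s q / 2 - out_mass s q <= gap s q) by (unfold gap; apply Rmax_r).
    apply Rabs_lt_inv in U. pose proof (Rmin_l (M / 8) (u0 * M / 32)). pose proof (Rmin_r (M / 8) (u0 * M / 32)).
    fold c in H, H0. assert (M / 8 <= gap s q) by lra.
    assert (u0 / 2 * (M / 8) <= u * gap s q) by (apply Rmult_le_compat; lra).
    lra. }
  unfold push. rewrite Hwq. apply (Hf (link_base s)); auto.
  apply (push_weights s Hs q (proj1 Hq)); auto. unfold M in *; lra.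
Qed.

Lemma simplex_minus_list rho s : L rho -> exists l, NoDup l /\ forall v, In v l <-> rho v /\ ~ s v.
Proof.
  intros Hr. destruct (simplex_list L HL rho Hr) as [lr [Hnr Hir]].
  destruct (NoDup_filter_ex (fun v => ~ s v) lr) as [l [Hn Hi]].
  exists l. split; auto. intros v. rewrite Hi, <- Hir. tauto.
Qed.

Lemma join_contr_cont s F lF a0 b0 Om y t : kcell s -> (forall v, In v lF <-> F v) -> link L s F ->
  rel_open L Om -> join_weights (verts s) a0 b0 -> in_real (link L s) y -> subset (supp y) F -> 0 <= t <= 1 ->
  Om (join s a0 b0 (link_contr s y t)) ->
  exists e, 0 < e /\ forall y' t' a b, in_real (link L s) y' -> subset (supp y') F -> 0 <= t' <= 1 ->
    (forall v, In v lF -> Rabs (y' v - y v) < e) -> Rabs (t' - t) < e ->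
    join_weights (verts s) a b -> weights_near (verts s) a0 b0 e a b -> Om (join s a b (link_contr s y' t')).
Proof.
  intros Hs HiF HF HOm Hv0 Hy HyF Ht Hjoin.
  destruct (link_contr_spec s (proj1 Hs)) as [_ [Hcr [_ [_ HCC]]]].
  destruct (join_cont L HL s (verts s) (kcell_verts_spec s Hs) (kcell_simplex s Hs) Om a0 b0 _ HOm Hv0
    (Hcr y t Hy) Hjoin) as [Ow [HOw [Oww [etaw [Hetaw Hfw]]]]].
  destruct (HCC _ _ Hy Ht Ow HOw Oww) as [N [[_ HNo] [Ny [d [Hd HfN]]]]].
  destruct (HNo F HF _ Ny HyF) as [eN [HeN HfN2]].
  exists (Rmin etaw (Rmin d eN)). split; [minpos|].
  intros y' t' a b Hy' HyF' Ht' Hdy Hdt Hv Hp.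
  assert (Hcl : close y y' eN).
  { intros v. destruct (classic (In v lF)) as [Hv'|Hv'].
    - rewrite Rabs_minus_sym. eapply Rlt_le_trans; [exact (Hdy v Hv')|]. minle.
    - assert (Hyv : y v = 0) by (apply NNPP; intro Hz; apply Hv', HiF, HyF; auto).
      assert (Hyv' : y' v = 0) by (apply NNPP; intro Hz; apply Hv', HiF, HyF'; auto).
      rewrite Hyv, Hyv', Rminus_diag, Rabs_R0; auto. }
  apply Hfw; auto.
  - apply HfN; auto. eapply Rlt_le_trans; [exact Hdt|]. minle.
  - apply weights_near_mono with (Rmin etaw (Rmin d eN)); auto. minle.
Qed.

Lemma not_in_link_near s F lF y : NoDup lF -> (forall v, In v lF <-> F v) -> ((exists v, F v) -> link L s F) ->
  (forall v, 0 <= y v) -> subset (supp y) F -> ~ in_real (link L s) y ->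
  exists e, 0 < e /\ forall y', (forall v, In v lF -> Rabs (y' v - y v) < e) -> subset (supp y') F ->
    ~ in_real (link L s) y'.
Proof.
  intros HnF HiF HlkF Hy0 HyF Hyn.
  assert (Hsum : sumL y lF <> 1).
  { intros Hs1. apply Hyn. split; [|split]; auto.
    - assert (Hne : exists v, supp y v).
      { apply NNPP; intro Hn. rewrite sumL_zero in Hs1; [lra|].
        intros v _. apply NNPP; intro Hz; apply Hn; exists v; auto. }
      destruct Hne as [v1 Hv1].
      destruct (HlkF (ex_intro _ v1 (HyF v1 Hv1))) as [HLF [HdF [rho' [Hr' [HFr HsF]]]]].
      split; [|split].
      + apply (complex_face L HL) with F; auto. exists v1; auto.
      + intros v Hv. apply HdF, HyF; auto.
      + exists rho'. split; auto. split; auto. intros v Hv; apply HFr, HyF; auto.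
    - exists lF. split; auto. split; auto. intros v Hv. apply HiF, HyF; auto. }
  destruct (sumL_neq_near y lF 1 Hsum) as [e [He Hf]]. exists e. split; auto.
  intros y' Hd HyF' Hy'. apply (Hf y' Hd). apply (in_real_sum (link L s)); auto.
  intros v Hv. apply HiF, HyF'; auto.
Qed.

(* The link point and the contraction time are packed into one function on [option V], so that
   compactness of the box [0,1]^(F + 1) makes the continuity of the contraction uniform. *)
Lemma join_contr_uniform s F lF a0 b0 Om : kcell s -> NoDup lF -> (forall v, In v lF <-> F v) ->
  ((exists v, F v) -> link L s F) -> rel_open L Om -> join_weights (verts s) a0 b0 ->
  (forall w, in_real (link L s) w -> Om (join s a0 b0 w)) ->
  exists eta, 0 < eta /\ forall y t a b, in_real (link L s) y -> subset (supp y) F -> 0 <= t <= 1 ->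
    join_weights (verts s) a b -> weights_near (verts s) a0 b0 eta a b -> Om (join s a b (link_contr s y t)).
Proof.
  intros Hs HnF HiF HlkF HOm Hv0 Hjoin0.
  destruct (link_contr_spec s (proj1 Hs)) as [_ [Hcr _]].
  set (idx := None :: map Some lF).
  assert (Hin : forall v, In (Some v) idx <-> In v lF).
  { intros v. unfold idx. simpl. rewrite in_map_iff. split.
    - intros [H|[x [H1 H2]]]; [discriminate|]. injection H1; intros ->; auto.
    - intros H; right; exists v; auto. }
  set (yP := fun (P : option V -> R) v => P (Some v)).
  set (Fu := fun eta (P : option V -> R) => in_real (link L s) (yP P) -> subset (supp (yP P)) F ->
      forall a b, join_weights (verts s) a b -> weights_near (verts s) a0 b0 eta a b ->
      Om (join s a b (link_contr s (yP P) (P None)))).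
  destruct (uniform_on_box idx (fun _ => 0) (fun _ => 1) (fun _ => 0) Fu) as [eta [Heta Hf]].
  - intros e e' P He' HFu Hy HyF a b Hv Hp. apply HFu; auto.
    apply weights_near_mono with e'; auto; lra.
  - intros P [HP1 HP2].
    assert (HyF : subset (supp (yP P)) F).
    { intros v Hv. apply HiF, Hin. apply NNPP; intro Hn. apply Hv. unfold yP. rewrite HP2; auto. }
    destruct (classic (in_real (link L s) (yP P))) as [Hyr|Hyn].
    + destruct (in_real_supp_ne (link L s) _ Hyr) as [v1 Hv1].
      assert (HF : link L s F) by (apply HlkF; exists v1; apply HyF; auto).
      assert (Hth : 0 <= P None <= 1) by (apply HP1; left; auto).
      destruct (join_contr_cont s F lF a0 b0 Om (yP P) (P None) Hs HiF HF HOm Hv0 Hyr HyF Hth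
        (Hjoin0 _ (Hcr _ _ Hyr))) as [e [He Hfe]].
      exists e. split; auto. intros P' [HP1' _] Hd Hy' HyF' a b Hv Hp.
      apply Hfe; auto.
      * apply HP1'; left; auto.
      * intros v Hv'. apply Hd, Hin; auto.
      * apply Hd; left; auto.
    + destruct (not_in_link_near s F lF (yP P)) as [e [He Hne]]; auto.
      { intros v. destruct (classic (In (Some v) idx)) as [Hv|Hv].
        - apply HP1; auto.
        - unfold yP; rewrite HP2; auto; lra. }
      exists e. split; auto. intros P' _ Hd Hy' HyF'. exfalso.
      apply (Hne (yP P')); auto. intros v Hv. apply Hd, Hin; auto.
  - exists eta. split; auto. intros y t a b Hy HyF Ht Hv Hp.
    set (P := fun o : option V => match o with Some v => y v | None => t end).
    apply (Hf P); auto. split.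
    + intros [v|] Ho; simpl; auto.
      split; [apply in_real_nonneg with (link L s) | apply in_real_le1 with (link L s)]; auto.
    + intros [v|] Ho; simpl.
      * apply NNPP; intro Hz. apply Ho, Hin, HiF, HyF; auto.
      * exfalso; apply Ho; left; auto.
Qed.

Lemma push_cont_out_pos s x0 u0 rho Om :
  kcell s -> in_real L x0 -> 0 < min_coord s x0 -> L rho -> subset (supp x0) rho -> 0 <= u0 <= 1 -> 0 < out_mass s x0 ->
  rel_open L Om -> Om (push s x0 u0) ->
  exists e, 0 < e /\ forall q u, on_simplex rho q -> close x0 q e -> 0 <= u <= 1 -> Rabs (u - u0) < e -> Om (push s q u).
Proof.
  intros Hs Hx0 Hm0 Hr Hsub Hu0 Hsv0 HOm HOm0.
  destruct (link_dir_real s Hs x0 Hx0 Hm0 Hsv0) as [Hyr Hys].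
  destruct (out_mass_pos_supp s Hs x0 Hx0 Hsv0) as [v1 [Hv1 Hxv1]].
  set (F := fun v => rho v /\ ~ s v).
  assert (HF : link L s F) by (apply link_face with x0; auto; exists v1; split; auto; apply Hsub; auto).
  assert (HyF : subset (supp (link_dir s x0)) F).
  { intros v Hv; destruct (Hys v Hv); split; auto; apply Hsub; auto. }
  destruct (simplex_minus_list rho s Hr) as [lF [HnF HiF']].
  assert (Hth0 := contr_time_in s x0 u0 Hu0 (proj1 (gap_bounds s Hs x0 Hx0 Hm0))).
  destruct (join_contr_cont s F lF _ _ Om (link_dir s x0) (contr_time s x0 u0) Hs HiF' HF HOm
    (push_weights s Hs x0 Hx0 Hm0 u0 Hu0) Hyr HyF Hth0 HOm0) as [eta [Heta Hf]].
  set (D := on_simplex rho).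
  destruct (rcont_gt_near D x0 u0 _ 0 (rcont_out_mass D x0 u0 s) Hsv0) as [e1 [He1 H1]].
  destruct (rcont_gt_near D x0 u0 _ 0 (rcont_min_coord D x0 u0 s) Hm0) as [e2 [He2 H2]].
  destruct (rcont_uniform D x0 u0 (fun v q u => if cell_dec s v then 0 else q v / out_mass s q) lF
     (fun v _ => rcont_link_dir D x0 u0 s v ltac:(lra)) eta Heta) as [e3 [He3 H3]].
  destruct (rcont_contr_time D x0 u0 s ltac:(lra) eta Heta) as [e4 [He4 H4]].
  destruct (push_weights_near D s x0 u0 eta Hs Hx0 Hm0 Heta) as [e5 [He5 H5]].
  set (e := Rmin (Rmin e1 e2) (Rmin e3 (Rmin e4 e5))).
  exists e. split; [unfold e; minpos|].
  intros q u Hq Hc Hu Hdu.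
  assert (C : forall ei, e <= ei -> close x0 q ei /\ Rabs (u - u0) < ei).
  { intros ei Hei. split. eapply close_mono; [|exact Hc]; auto. lra. }
  destruct (C e1 ltac:(unfold e; minle)) as [C1 U1]. destruct (C e2 ltac:(unfold e; minle)) as [C2 U2].
  destruct (C e3 ltac:(unfold e; minle)) as [C3 U3]. destruct (C e4 ltac:(unfold e; minle)) as [C4 U4].
  destruct (C e5 ltac:(unfold e; minle)) as [C5 U5].
  assert (Hsvq : 0 < out_mass s q) by (apply (H1 q u); auto).
  assert (Hmq : 0 < min_coord s q) by (apply (H2 q u); auto).
  destruct (link_dir_real s Hs q (proj1 Hq) Hmq Hsvq) as [Hyq Hysq].
  apply Hf; auto.
  - intros v Hv. destruct (Hysq v Hv). split; auto. apply (proj2 Hq); auto.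
  - apply contr_time_in; auto. apply (gap_bounds s Hs q (proj1 Hq) Hmq).
  - intros v Hv. rewrite (link_dir_pos s q v Hsvq), (link_dir_pos s x0 v Hsv0). exact (H3 q u Hq C3 U3 v Hv).
  - rewrite (contr_time_pos s q u Hsvq), (contr_time_pos s x0 u0 Hsv0). apply (H4 q u); auto.
  - apply push_weights; auto. apply Hq.
Qed.

Lemma push_cont_start s x0 rho Om :
  kcell s -> in_real L x0 -> 0 < min_coord s x0 -> L rho -> subset (supp x0) rho -> out_mass s x0 = 0 ->
  rel_open L Om -> Om (push s x0 0) ->
  exists e, 0 < e /\ forall q u, on_simplex rho q -> close x0 q e -> 0 <= u <= 1 -> Rabs (u - 0) < e -> Om (push s q u).
Proof.
  intros Hs Hx0 Hm0 Hr Hsub Hsv0 HOm HOm0.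
  assert (Hz01 : 0 <= 0 <= 1) by lra.
  assert (Hv0 := push_weights s Hs x0 Hx0 Hm0 0 Hz01).
  assert (Hx0id := push_id s Hs x0 Hx0 Hm0 0 Hz01 (or_introl eq_refl)).
  destruct (link_contr_spec s (proj1 Hs)) as [Hy0r _].
  set (a0 := shrunk s x0 0). set (b0 := pushed_out_mass s x0 0).
  assert (Hjoin0 : forall w, join s a0 b0 w = x0).
  { intros w. transitivity (push s x0 0); [|exact Hx0id].
    apply functional_extensionality; intro v. unfold push, join. fold a0 b0.
    destruct (cell_dec s v); auto. unfold b0, pushed_out_mass. rewrite Hsv0, !Rmult_0_l.
    unfold Rdiv. rewrite !Rmult_0_l, Rplus_0_l, !Rmult_0_l. reflexivity. }
  rewrite Hx0id in HOm0.
  destruct (join_cont L HL s (verts s) (kcell_verts_spec s Hs) (kcell_simplex s Hs) Om a0 b0 (link_base s)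
    HOm Hv0 Hy0r ltac:(rewrite Hjoin0; auto)) as [O1 [HO1 [Ow1 [eta1 [Heta1 Hf1]]]]].
  set (F := fun v => rho v /\ ~ s v).
  destruct (simplex_minus_list rho s Hr) as [lF [HnF HiF']].
  destruct (join_contr_uniform s F lF a0 b0 Om Hs HnF HiF') as [eta2 [Heta2 Hf2]]; auto.
  { intros [v Hv]. apply link_face with x0; auto. exists v; auto. }
  { intros w _. rewrite Hjoin0; auto. }
  set (eta := Rmin eta1 eta2).
  assert (Heta : 0 < eta) by (unfold eta; minpos).
  set (D := on_simplex rho).
  destruct (rcont_gt_near D x0 0 _ (min_coord s x0 / 2) (rcont_min_coord D x0 0 s) ltac:(cbv beta; lra))
    as [e1 [He1 H1]].
  destruct (push_weights_near D s x0 0 eta Hs Hx0 Hm0 Heta) as [e2 [He2 H2]].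
  exists (Rmin e1 e2). split; [minpos|].
  intros q u Hq Hcl Hu Hdu.
  assert (Hmq : 0 < min_coord s q).
  { specialize (H1 q u Hq). cbv beta in H1. apply Rlt_trans with (min_coord s x0 / 2); [lra|].
    apply H1; [eapply close_mono; [|exact Hcl]; minle | eapply Rlt_le_trans; [exact Hdu|]; minle]. }
  assert (Hpb : forall eta', eta <= eta' -> weights_near (verts s) a0 b0 eta' (shrunk s q u) (pushed_out_mass s q u)).
  { intros eta' Hle. apply weights_near_mono with eta; auto. apply H2; auto.
    - eapply close_mono; [|exact Hcl]; minle.
    - eapply Rlt_le_trans; [exact Hdu|]; minle. }
  destruct Hq as [Hqr Hqs].
  assert (Hvq := push_weights s Hs q Hqr Hmq u Hu).
  destruct (Rle_lt_or_eq_dec _ _ (proj1 (out_mass_bounds s Hs q Hqr))) as [Hp|Hz].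
  - destruct (link_dir_real s Hs q Hqr Hmq Hp) as [Hyq Hysq].
    apply Hf2; auto.
    + intros v Hv. destruct (Hysq v Hv). split; auto.
    + apply contr_time_in; auto. apply (gap_bounds s Hs q Hqr Hmq).
    + apply Hpb. unfold eta; minle.
  - unfold push. rewrite (contr_dir_base s q u Hs Hqr Hmq Hu (or_introl (eq_sym Hz))).
    apply Hf1; auto. apply Hpb. unfold eta; minle.
Qed.

Lemma push_cont s x0 u0 rho Om :
  kcell s -> in_real L x0 -> 0 < min_coord s x0 -> L rho -> subset (supp x0) rho -> 0 <= u0 <= 1 ->
  rel_open L Om -> Om (push s x0 u0) ->
  exists e, 0 < e /\ forall q u, on_simplex rho q -> close x0 q e -> 0 <= u <= 1 -> Rabs (u - u0) < e -> Om (push s q u).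
Proof. intros Hs Hx0 Hm0 Hr Hsub Hu0 HOm HOm0.
 pose proof (out_mass_bounds s Hs x0 Hx0) as [Hb _].
 destruct (Rle_lt_or_eq_dec _ _ Hb) as [Hp|Hz].
 - apply push_cont_out_pos; auto.
 - destruct (Rle_lt_or_eq_dec _ _ (proj1 Hu0)) as [Hu|Hu].
   + apply push_cont_on_cell; auto. lra.
   + subst u0. apply push_cont_start; auto. Qed.

Lemma in_mass_close s x q e : kcell s -> close x q e -> Rabs (in_mass s x - in_mass s q) <= INR (S k) * e.
Proof. intros Hs Hc. destruct (kcell_verts s Hs) as [_ [_ Hl]]. rewrite <- Hl. apply sumL_dist_le. intros v _; left; apply Hc. Qed.
Lemma min_coord_close s x q e : kcell s -> close x q e -> Rabs (min_coord s x - min_coord s q) <= e.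
Proof. intros Hs Hc. apply minL_close. apply (kcell_verts_ne s Hs). intros v _; left; apply Hc. Qed.

Lemma push_off_eq_push s x0 q u : kcell s -> in_real L x0 -> out_mass s x0 <= min_coord s x0 / 2 -> 0 < min_coord s x0 ->
  in_real L q -> close x0 q (min_coord s x0 / 4) -> 0 <= u <= 1 -> push_off q u = push s q u.
Proof. intros Hs Hx0 Hc Hm Hq Hcl Hu.
 destruct (classic (exists s', near_cell s' q)) as [[s' Hs']|Hn].
 - assert (s' = s). { destruct Hs' as [Hs'1 Hs'2]. apply (near_cell_near_unique s s' x0 q (min_coord s x0 / 4)); auto. lra. }
   subst s'. apply push_off_near; auto.
 - rewrite push_off_far; auto. symmetry.
   assert (Hmq : 0 < min_coord s q). { pose proof (min_coord_close s x0 q _ Hs Hcl). apply Rabs_le_inv in H. lra. }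
   apply (push_id s Hs q Hq Hmq u Hu). right.
   unfold gap. assert (min_coord s q / 2 - out_mass s q <= 0).
   { apply Rnot_lt_le. intro Hlt. apply Hn. exists s. split; auto. lra. }
   unfold Rmax; destruct Rle_dec; lra. Qed.

Lemma far_from_cells_near x0 rho : in_real L x0 -> L rho -> ~ (exists s, near_cell_closed s x0) ->
  exists e, 0 < e /\ forall q, in_real L q -> subset (supp q) rho -> close x0 q e -> ~ (exists s, near_cell s q).
Proof.
  intros Hx0 Hr HnCR.
  destruct (gap_uniform x0 rho Hx0 Hr) as [d [Hd Hgd]].
  { intros s Hs _. apply Rnot_le_lt. intro Hle. apply HnCR. exists s. split; auto. }
  assert (Hk : 0 <= INR (S k)) by apply pos_INR.
  set (e := d / (INR (S k) + 2)).
  assert (He : 0 < e) by (apply Rdiv_lt_0_compat; lra).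
  exists e. split; auto. intros q Hq Hqs Hcl [s [Hs Hc]].
  assert (Hmq : 0 < min_coord s q) by (pose proof (out_mass_bounds s Hs q Hq); lra).
  assert (Hsr : subset s rho) by (intros v Hv; apply Hqs, (min_coord_pos_supp s Hs q v Hmq Hv)).
  specialize (Hgd s Hs Hsr).
  pose proof (in_mass_close s x0 q e Hs Hcl) as Hin. pose proof (min_coord_close s x0 q e Hs Hcl) as Hmin.
  apply Rabs_le_inv in Hin. apply Rabs_le_inv in Hmin. unfold out_mass in *.
  assert ((INR (S k) + 2) * e = d) by (unfold e; field; lra).
  nra.
Qed.

Lemma push_off_cont : htpy_cont_on L (off_skel k) push_off.
Proof.
  intros rho Hr x0 u0 Hx0W Hsub Hu0 Om HOm HOmx.
  assert (Hx0 : in_real L x0) by apply Hx0W.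
  destruct (classic (exists s, near_cell_closed s x0)) as [[s HCR]|HnCR].
  - assert (HM := near_cell_closed_min_pos s x0 Hx0W HCR). destruct HCR as [Hs Hc].
    rewrite (push_off_eq_push s x0 x0 u0 Hs Hx0 Hc HM Hx0 (close_refl x0 (min_coord s x0 / 4) ltac:(lra)) Hu0) in HOmx.
    destruct (push_cont s x0 u0 rho Om Hs Hx0 HM Hr Hsub Hu0 HOm HOmx) as [e [He Hf]].
    exists (Rmin e (min_coord s x0 / 4)). split; [minpos; lra|].
    intros q u HqW Hqs Hcl Hu Hdu. assert (Hq : in_real L q) by apply HqW.
    rewrite (push_off_eq_push s x0 q u Hs Hx0 Hc HM Hq); auto.
    + apply Hf; auto.
      * split; auto.
      * eapply close_mono; [|exact Hcl]; minle.
      * eapply Rlt_le_trans; [exact Hdu|]; minle.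
    + eapply close_mono; [|exact Hcl]; minle.
  - assert (Hnx : ~ (exists s, near_cell s x0)).
    { intros [s [Hs Hc]]. apply HnCR. exists s. split; auto. lra. }
    rewrite (push_off_far x0 u0 Hnx) in HOmx.
    destruct (far_from_cells_near x0 rho Hx0 Hr HnCR) as [d [Hd Hfar]].
    destruct (proj2 HOm rho Hr x0 HOmx Hsub) as [eO [HeO HfO]].
    exists (Rmin eO d). split; [minpos|].
    intros q u HqW Hqs Hcl Hu Hdu. assert (Hq : in_real L q) by apply HqW.
    rewrite push_off_far.
    + apply HfO; auto. eapply close_mono; [|exact Hcl]; minle.
    + apply Hfar; auto. eapply close_mono; [|exact Hcl]; minle.
Qed.

Lemma heq_incl_off_skel_step : heq_incl L (off_skel (S k)) (off_skel k).
Proof.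
  split. intros x; apply off_skel_mono.
  exists (fun x => push_off x 1). split. intros x Hx. apply push_off_1; auto.
  split. apply htpy_cont_at. lra. apply push_off_cont.
  split.
  - exists push_off. split; [|split; [|split]].
    + apply push_off_cont.
    + intros x t Hx Ht. apply push_off_k; auto.
    + intros x Hx. apply push_off_0; auto. apply Hx.
    + auto.
  - exists (fun x t => push_off x (1 - t)). split; [|split; [|split]].
    + apply htpy_cont_restrict with (off_skel k). apply off_skel_mono. apply htpy_cont_rev. apply push_off_cont.
    + intros x t Hx Ht. apply push_off_Sk; auto. lra.
    + intros x Hx. rewrite Rminus_0_r. auto.
    + intros x Hx. rewrite Rminus_diag. apply push_off_0; auto. apply Hx.
Qed.

End PushOff.
End Filtration.

Theorem proposition3p2 (V : Type) (L L0 : (V -> Prop) -> Prop)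
  (HL : is_complex L) (HL0 : is_subcomplex L0 L) (Hfd : finite_dim L)
  (Hlink : forall sigma, L0 sigma -> contractible (weak_top (link L sigma))) :
  homotopy_equivalence (subspace_top (weak_top L) (not_in_sub L L0))
    (weak_top L) (fun p => proj1_sig p).
Proof.
  destruct Hfd as [n Hn].
  apply (heq_incl_homotopy_equivalence L (outside_L0 L L0)).
  - apply rel_open_outside_L0; auto.
  - apply not_in_sub_iff.
  - rewrite <- (off_skel_dim L L0 n Hn).
    apply heq_incl_off_skel; auto. intros k. apply heq_incl_off_skel_step; auto.
Qed.
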